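(* Let $d:\mathcal{A}\to A$ be an invariant derivation. Then there exist a number $c_0\in\mathbb{C}$ and an approximately inner derivation $\tilde d:\mathcal{A}\to A$ such that $d(a)=c_0[\mathbb{K},a]+\tilde d(a)$ for all $a\in\mathcal{A}$, and this decomposition (i.e. $c_0$ and $\tilde d$) is unique. In particular $a\mapsto[\mathbb{K},a]$ is not approximately inner.
   Context: Setup: $G$ is an infinite compact (Hausdorff) abelian group, written additively, and $x_1\in G$ generates a dense cyclic subgroup; $x_n=nx_1$, $\varphi(x)=x+x_1$. $\widehat G$ is the group of continuous characters. Let $H_+=\ell^2(\mathbb{Z}_{\ge 0})$ with canonical basis $\{E_k^+\}$; $UE_k^+=E_{k+1}^+$, $M^+_fE^+_k=f(x_k)E^+_k$, $\mathbb{K}E_k^+=kE_k^+$. $A=C^*(U,M^+_f:f\in C(G))$, $\mathcal{A}$ is the $*$-subalgebra generated by $U,U^*,M^+_\chi$ ($\chi\in\widehat G$). For $\theta\in\mathbb{R}$ let $\rho_\theta(a)=e^{i\theta\mathbb{K}}ae^{-i\theta\mathbb{K}}$; it preserves $A$ and $\mathcal{A}$. A derivation $d:\mathcal{A}\to A$ (linear, Leibniz rule) is $n$-covariant if $\rho_\theta^{-1}(d(\rho_\theta(a)))=e^{-in\theta}d(a)$ for all $\theta$ and $a\in\mathcal{A}$, and invariant if it is $0$-covariant. It is approximately inner if there are $x_j\in A$ with $d(a)=\lim_j[x_j,a]$ in norm for every $a\in\mathcal{A}$. *)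

From Stdlib Require Import Reals List ZArith ClassicalEpsilon.
Open Scope R_scope.

Definition CC := (R * R)%type.
Definition C0 : CC := (0, 0).
Definition C1 : CC := (1, 0).
Definition Cadd (z w : CC) : CC := (fst z + fst w, snd z + snd w).
Definition Copp (z : CC) : CC := (- fst z, - snd z).
Definition Csub (z w : CC) : CC := Cadd z (Copp w).
Definition Cmul (z w : CC) : CC :=
  (fst z * fst w - snd z * snd w, fst z * snd w + snd z * fst w).
Definition Cconj (z : CC) : CC := (fst z, - snd z).
Definition Cnorm2 (z : CC) : R := fst z * fst z + snd z * snd z.
Definition Cabs (z : CC) : R := sqrt (Cnorm2 z).
Definition RtoC (x : R) : CC := (x, 0).
Definition Cexpi (t : R) : CC := (cos t, sin t).

Fixpoint rsum (f : nat -> R) (N : nat) : R :=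
  match N with O => 0 | S n => rsum f n + f n end.
Fixpoint csumf (f : nat -> CC) (N : nat) : CC :=
  match N with O => C0 | S n => Cadd (csumf f n) (f n) end.

(* convergent complex series and its value (0 if it diverges) *)
Definition Cseries_to (s : nat -> CC) (l : CC) : Prop :=
  infinite_sum (fun n => fst (s n)) (fst l) /\ infinite_sum (fun n => snd (s n)) (snd l).
Definition Cseries (s : nat -> CC) : CC :=
  epsilon (inhabits C0) (fun l => Cseries_to s l).

(* ---------- operators on H_+ = l^2(Z_{>=0}) via their matrices
   M k j = < E_k , M E_j > w.r.t. the canonical basis ---------- *)
Definition mat := nat -> nat -> CC.
Definition madd (A B : mat) : mat := fun k j => Cadd (A k j) (B k j).
Definition msub (A B : mat) : mat := fun k j => Csub (A k j) (B k j).
Definition mscal (c : CC) (A : mat) : mat := fun k j => Cmul c (A k j).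
Definition madj (A : mat) : mat := fun k j => Cconj (A j k).
Definition mmul (A B : mat) : mat := fun k j => Cseries (fun l => Cmul (A k l) (B l j)).
Definition diag (f : nat -> CC) : mat := fun k j => if Nat.eqb k j then f k else C0.

(* ||M|| <= r : ||M v||^2 <= r^2 ||v||^2 for all finitely supported v
   (rows truncated at an arbitrary K). *)
Definition mat_bound (M : mat) (r : R) : Prop :=
  0 <= r /\
  forall (v : nat -> CC) (N K : nat),
    rsum (fun k => Cnorm2 (csumf (fun j => Cmul (M k j) (v j)) N)) K
      <= r * r * rsum (fun j => Cnorm2 (v j)) N.
Definition bounded (M : mat) : Prop := exists r, mat_bound M r.

Definition norm_lim (s : nat -> mat) (L : mat) : Prop :=
  forall eps, eps > 0 -> exists J, forall j, (J <= j)%nat -> mat_bound (msub (s j) L) eps.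

Inductive star_alg (gen : mat -> Prop) : mat -> Prop :=
| sa_gen : forall a, gen a -> star_alg gen a
| sa_add : forall a b, star_alg gen a -> star_alg gen b -> star_alg gen (madd a b)
| sa_scal : forall c a, star_alg gen a -> star_alg gen (mscal c a)
| sa_mul : forall a b, star_alg gen a -> star_alg gen b -> star_alg gen (mmul a b)
| sa_adj : forall a, star_alg gen a -> star_alg gen (madj a).

Definition cstar_alg (gen : mat -> Prop) (a : mat) : Prop :=
  bounded a /\
  forall eps, eps > 0 -> exists b, star_alg gen b /\ mat_bound (msub a b) eps.

Record CAGroup := {
  carrier :> Type;
  g0 : carrier;
  gadd : carrier -> carrier -> carrier;
  gopp : carrier -> carrier;
  gaddA : forall x y z, gadd x (gadd y z) = gadd (gadd x y) z;
  gaddC : forall x y, gadd x y = gadd y x;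
  gadd0 : forall x, gadd x g0 = x;
  gaddN : forall x, gadd x (gopp x) = g0;
  opens : (carrier -> Prop) -> Prop;
  open_full : opens (fun _ => True);
  open_inter : forall U V, opens U -> opens V -> opens (fun x => U x /\ V x);
  open_union : forall F : (carrier -> Prop) -> Prop,
      (forall U, F U -> opens U) -> opens (fun x => exists U, F U /\ U x);
  hausdorff : forall x y, x <> y ->
      exists U V, opens U /\ opens V /\ U x /\ V y /\ (forall z, U z -> V z -> False);
  compact : forall F : (carrier -> Prop) -> Prop,
      (forall U, F U -> opens U) -> (forall x, exists U, F U /\ U x) ->
      exists l : list (carrier -> Prop),
        (forall U, In U l -> F U) /\ (forall x, exists U, In U l /\ U x);
  gadd_cont : forall x y W, opens W -> W (gadd x y) ->
      exists U V, opens U /\ opens V /\ U x /\ V y /\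
                  (forall u v, U u -> V v -> W (gadd u v));
  gopp_cont : forall x W, opens W -> W (gopp x) ->
      exists U, opens U /\ U x /\ (forall u, U u -> W (gopp u))
}.

Arguments g0 {_}. Arguments gadd {_} _ _. Arguments gopp {_} _. Arguments opens {_} _.

Definition infinite_group (G : CAGroup) : Prop :=
  forall l : list G, exists x : G, ~ In x l.

Fixpoint nmul {G : CAGroup} (n : nat) (x : G) : G :=
  match n with O => g0 | S m => gadd (nmul m x) x end.
Definition zmul {G : CAGroup} (n : Z) (x : G) : G :=
  match n with
  | Z0 => g0
  | Zpos p => nmul (Pos.to_nat p) x
  | Zneg p => gopp (nmul (Pos.to_nat p) x)
  end.

Definition dense_cyclic (G : CAGroup) (x1 : G) : Prop :=
  forall U, opens U -> (exists y, U y) -> exists n : Z, U (zmul n x1).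

Definition continuousC {G : CAGroup} (f : G -> CC) : Prop :=
  forall x eps, eps > 0 ->
    exists U, opens U /\ U x /\ (forall y, U y -> Cabs (Csub (f y) (f x)) < eps).

Definition character {G : CAGroup} (chi : G -> CC) : Prop :=
  continuousC chi /\ (forall x, Cabs (chi x) = 1) /\
  (forall x y, chi (gadd x y) = Cmul (chi x) (chi y)).

Definition Umat : mat := fun k j => if Nat.eqb k (S j) then C1 else C0.
(* M^+_f E_k = f(x_k) E_k, x_k = k x_1 *)
Definition Mf {G : CAGroup} (x1 : G) (f : G -> CC) : mat := diag (fun k => f (nmul k x1)).
(* K E_k = k E_k  (unbounded; only its matrix is used) *)
Definition Kmat : mat := diag (fun k => RtoC (INR k)).
Definition commK (a : mat) : mat := msub (mmul Kmat a) (mmul a Kmat).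
Definition rho (theta : R) (a : mat) : mat :=
  mmul (mmul (diag (fun k => Cexpi (theta * INR k))) a)
       (diag (fun k => Cexpi (- theta * INR k))).

(* A = C*(U, M_f : f in C(G)) *)
Definition genA {G : CAGroup} (x1 : G) (a : mat) : Prop :=
  a = Umat \/ exists f : G -> CC, continuousC f /\ a = Mf x1 f.
Definition inA {G : CAGroup} (x1 : G) : mat -> Prop := cstar_alg (genA x1).
(* calA = *-algebra generated by U, U^*, M_chi (chi in \hat G) *)
Definition genAA {G : CAGroup} (x1 : G) (a : mat) : Prop :=
  a = Umat \/ a = madj Umat \/ exists chi : G -> CC, character chi /\ a = Mf x1 chi.
Definition inAA {G : CAGroup} (x1 : G) : mat -> Prop := star_alg (genAA x1).

Definition is_derivation {G : CAGroup} (x1 : G) (d : mat -> mat) : Prop :=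
  (forall a, inAA x1 a -> inA x1 (d a)) /\
  (forall a b, inAA x1 a -> inAA x1 b -> d (madd a b) = madd (d a) (d b)) /\
  (forall c a, inAA x1 a -> d (mscal c a) = mscal c (d a)) /\
  (forall a b, inAA x1 a -> inAA x1 b ->
     d (mmul a b) = madd (mmul (d a) b) (mmul a (d b))).

(* n-covariance; rho_theta^{-1} = rho_{-theta} *)
Definition covariant {G : CAGroup} (x1 : G) (n : Z) (d : mat -> mat) : Prop :=
  forall theta a, inAA x1 a ->
    rho (- theta) (d (rho theta a)) = mscal (Cexpi (- IZR n * theta)) (d a).
Definition invariant {G : CAGroup} (x1 : G) (d : mat -> mat) : Prop :=
  covariant x1 0%Z d.

Definition approx_inner {G : CAGroup} (x1 : G) (d : mat -> mat) : Prop :=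
  exists x : nat -> mat, (forall j, inA x1 (x j)) /\
    forall a, inAA x1 a -> norm_lim (fun j => msub (mmul (x j) a) (mmul a (x j))) (d a).

(* Invariance under the gauge action rho_theta forces d(M_chi) = 0
   for every character chi and puts d(U) on the subdiagonal, d(U) E_k = beta_k E_(k+1);
   the derivation is then governed by the single sequence beta.  Because d(U) lies in
   A, beta is a uniform limit of sequences of the form k |-> F(x_k) (up to finitely many
   terms) with F continuous on G.  An averaging argument along the dense orbit of x_1
   shows that such a sequence is, up to any eps, a constant c plus a discrete
   coboundary h(k+1) - h(k) where h(k) = H(x_k) + (eventually constant) lies in A as a
   diagonal operator; these constants pass to the uniform limit, giving c0.  The inner
   derivations [diag h_n, .] then converge in norm to d - c0 [K, .] on the generators,
   hence on all of calA.  Uniqueness, and the failure of approximate innerness of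
   [K, .], both come from one telescoping fact: a sequence has at most one "mean modulo
   bounded coboundaries". *)

From Pilot Require Import Defs.
From Stdlib Require Import Reals List ZArith ClassicalEpsilon.
From Stdlib Require Import Lra Lia FunctionalExtensionality PropExtensionality.
Open Scope R_scope.

Lemma CC_ext (z w : CC) : fst z = fst w -> snd z = snd w -> z = w.
Proof. destruct z, w; simpl; intros; subst; reflexivity. Qed.

Ltac csimpl := unfold Csub in *; unfold Cadd, Cmul, Copp, Cconj, C0, Defs.C1, RtoC, Cexpi in *; cbn [fst snd] in *.
Ltac ceq := apply CC_ext; csimpl; ring.

Lemma mat_ext (A B : mat) : (forall i j, A i j = B i j) -> A = B.
Proof. intros H; apply functional_extensionality; intro i; apply functional_extensionality; intro j; apply H. Qed.

Lemma sum_f_rsum (f : nat -> R) n : sum_f_R0 f n = rsum f (S n).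
Proof. induction n; simpl. ring. rewrite IHn. simpl. ring. Qed.

Lemma rsum_const_after (f : nat -> R) n m :
  (forall l, (l >= n)%nat -> f l = 0) -> (m >= n)%nat -> rsum f m = rsum f n.
Proof. intros H Hm. induction Hm. reflexivity. simpl. rewrite IHHm, H by lia. ring. Qed.

Lemma infinite_sum_fin (f : nat -> R) n :
  (forall l, (l >= n)%nat -> f l = 0) -> infinite_sum f (rsum f n).
Proof.
  intros H eps He. exists n. intros m Hm.
  rewrite sum_f_rsum, (rsum_const_after f n (S m)) by (auto; lia).
  unfold R_dist. rewrite Rminus_diag, Rabs_R0. lra.
Qed.

Lemma fst_csumf f n : fst (csumf f n) = rsum (fun i => fst (f i)) n.
Proof. induction n; simpl; auto. rewrite IHn; reflexivity. Qed.
Lemma snd_csumf f n : snd (csumf f n) = rsum (fun i => snd (f i)) n.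
Proof. induction n; simpl; auto. rewrite IHn; reflexivity. Qed.

Lemma Cseries_fin (s : nat -> CC) n : (forall l, (l >= n)%nat -> s l = C0) -> Cseries s = csumf s n.
Proof.
  intros H.
  assert (Hs : Cseries_to s (csumf s n)).
  { split; [rewrite fst_csumf|rewrite snd_csumf]; apply infinite_sum_fin;
      intros l Hl; rewrite H by exact Hl; reflexivity. }
  unfold Cseries.
  destruct (epsilon_spec (inhabits C0) (fun l => Cseries_to s l) (ex_intro _ _ Hs)) as [H1 H2].
  destruct Hs as [H3 H4].
  apply CC_ext; eapply uniqueness_sum; eauto.
Qed.

Lemma csumf_ext f g n : (forall i, (i < n)%nat -> f i = g i) -> csumf f n = csumf g n.
Proof. induction n; intros H; simpl; auto. rewrite IHn by (intros; apply H; lia). rewrite H by lia. auto. Qed.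

Lemma csumf_zero f n : (forall i, (i < n)%nat -> f i = C0) -> csumf f n = C0.
Proof. induction n; intros H; simpl; auto. rewrite IHn by (intros; apply H; lia). rewrite H by lia. ceq. Qed.

Lemma csumf_single f n m : (m < n)%nat -> (forall i, i <> m -> f i = C0) -> csumf f n = f m.
Proof.
  induction n; intros Hm H; [lia|]. simpl.
  destruct (Nat.eq_dec n m).
  - subst. rewrite csumf_zero by (intros; apply H; lia). ceq.
  - rewrite IHn by (auto; lia). rewrite (H n) by auto. ceq.
Qed.

Lemma Cseries_single (s : nat -> CC) m : (forall l, l <> m -> s l = C0) -> Cseries s = s m.
Proof.
  intros H. rewrite (Cseries_fin s (S m)). apply csumf_single; auto.
  intros l Hl; apply H; lia.
Qed.

Lemma csumf_add f g n : csumf (fun i => Cadd (f i) (g i)) n = Cadd (csumf f n) (csumf g n).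
Proof. induction n; simpl. ceq. rewrite IHn. ceq. Qed.
Lemma csumf_mull c f n : csumf (fun i => Cmul c (f i)) n = Cmul c (csumf f n).
Proof. induction n; simpl. ceq. rewrite IHn. ceq. Qed.
Lemma csumf_mulr c f n : csumf (fun i => Cmul (f i) c) n = Cmul (csumf f n) c.
Proof. induction n; simpl. ceq. rewrite IHn. ceq. Qed.
Lemma csumf_opp f n : csumf (fun i => Copp (f i)) n = Copp (csumf f n).
Proof. induction n; simpl. ceq. rewrite IHn. ceq. Qed.
Lemma csumf_conj f n : csumf (fun i => Cconj (f i)) n = Cconj (csumf f n).
Proof. induction n; simpl. ceq. rewrite IHn. ceq. Qed.
Lemma csumf_split f a n : csumf f (a + n) = Cadd (csumf f a) (csumf (fun t => f (a + t)%nat) n).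
Proof. induction n; simpl. rewrite Nat.add_0_r. ceq. rewrite Nat.add_succ_r. simpl. rewrite IHn. ceq. Qed.
Lemma csumf_swap (f : nat -> nat -> CC) n m :
  csumf (fun i => csumf (fun j => f i j) m) n = csumf (fun j => csumf (fun i => f i j) n) m.
Proof.
  induction n; simpl. rewrite csumf_zero; auto.
  rewrite IHn. rewrite <- csumf_add. reflexivity.
Qed.
Lemma csumf_extend f n m : (n <= m)%nat -> (forall i, (i >= n)%nat -> f i = C0) -> csumf f m = csumf f n.
Proof. intros Hm H. induction Hm. reflexivity. simpl. rewrite IHHm, H by lia. ceq. Qed.

Lemma rsum_nonneg f n : (forall i, 0 <= f i) -> 0 <= rsum f n.
Proof. intros H; induction n; simpl. lra. specialize (H n); lra. Qed.
Lemma rsum_le f g n : (forall i, (i < n)%nat -> f i <= g i) -> rsum f n <= rsum g n.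
Proof.
  induction n; intros H; simpl. lra. pose proof (H n (Nat.lt_succ_diag_r n)).
  assert (rsum f n <= rsum g n) by (apply IHn; intros; apply H; lia). lra.
Qed.
Lemma rsum_ext f g n : (forall i, (i < n)%nat -> f i = g i) -> rsum f n = rsum g n.
Proof. induction n; intros H; simpl. lra. rewrite IHn by (intros; apply H; lia). rewrite H by lia. auto. Qed.
Lemma rsum_add f g n : rsum (fun i => f i + g i) n = rsum f n + rsum g n.
Proof. induction n; simpl. lra. rewrite IHn. ring. Qed.
Lemma rsum_sub f g n : rsum (fun i => f i - g i) n = rsum f n - rsum g n.
Proof. induction n; simpl. lra. rewrite IHn. ring. Qed.
Lemma rsum_scal c f n : rsum (fun i => c * f i) n = c * rsum f n.
Proof. induction n; simpl. lra. rewrite IHn. ring. Qed.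
Lemma rsum_const c n : rsum (fun _ => c) n = INR n * c.
Proof. induction n; cbn [rsum]. simpl; ring. rewrite IHn, S_INR. ring. Qed.
Lemma rsum_mono_n f n m : (forall i, 0 <= f i) -> (n <= m)%nat -> rsum f n <= rsum f m.
Proof. intros H Hm. induction Hm. lra. simpl. specialize (H m). lra. Qed.
Lemma rsum_shift f n : rsum f (S n) = f 0%nat + rsum (fun k => f (S k)) n.
Proof. induction n; simpl. lra. simpl in IHn. rewrite IHn. ring. Qed.
Lemma rsum_telescope f N : rsum (fun i => f (S i)) N - rsum f N = f N - f 0%nat.
Proof. induction N; simpl. ring. lra. Qed.
Lemma rsum_abs_le f N e : (forall i, Rabs (f i) <= e) -> Rabs (rsum f N) <= INR N * e.
Proof.
  intros H. induction N; cbn [rsum]. rewrite Rabs_R0. simpl; lra.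
  eapply Rle_trans. apply Rabs_triang. rewrite S_INR. specialize (H N). lra.
Qed.
Lemma rsum_split s a N : rsum s (a + N) = rsum s a + rsum (fun i => s (a + i)%nat) N.
Proof. induction N. simpl. rewrite Nat.add_0_r. ring. rewrite Nat.add_succ_r. simpl. rewrite IHN. ring. Qed.

Lemma Rabs_diff_via x a b : Rabs (a - b) <= Rabs (x - a) + Rabs (x - b).
Proof.
  replace (a - b) with (- (x - a) + (x - b)) by ring.
  eapply Rle_trans. apply Rabs_triang. rewrite Rabs_Ropp. lra.
Qed.

Lemma Rabs_triang3 a b c : Rabs (a + b + c) <= Rabs a + Rabs b + Rabs c.
Proof.
  eapply Rle_trans. apply Rabs_triang. pose proof (Rabs_triang a b). lra.
Qed.

Lemma choice_fun {A B : Type} (P : A -> B -> Prop) : inhabited B -> (forall a, exists b, P a b) ->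
  exists f : A -> B, forall a, P a (f a).
Proof.
  intros inh H. exists (fun a => epsilon inh (P a)). intros a. apply epsilon_spec. apply H.
Qed.

(** * Banded matrices

   Every element of calA is banded (finitely many nonzero diagonals).  For banded
   factors the product [mmul] is a finite sum, so the usual algebraic identities
   (distributivity, associativity, adjoint of a product) hold. *)

Definition banded (A : mat) (W : nat) : Prop :=
  forall i j, (j + W < i)%nat \/ (i + W < j)%nat -> A i j = C0.

Lemma banded_mono A W W' : (W <= W')%nat -> banded A W -> banded A W'.
Proof. intros H HA i j Hij. apply HA. lia. Qed.

Lemma mmul_band_r A B W n i j : banded B W -> (j + W < n)%nat ->
  mmul A B i j = csumf (fun l => Cmul (A i l) (B l j)) n.
Proof.
  intros HB Hn. unfold mmul. apply Cseries_fin. intros l Hl. rewrite HB by lia. ceq.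
Qed.

Lemma mmul_band_l A B W n i j : banded A W -> (i + W < n)%nat ->
  mmul A B i j = csumf (fun l => Cmul (A i l) (B l j)) n.
Proof.
  intros HA Hn. unfold mmul. apply Cseries_fin. intros l Hl. rewrite HA by lia. ceq.
Qed.

Definition Ut : mat := madj Umat.
Definition Iden : mat := diag (fun _ => Defs.C1).

Lemma mmul_XU (X : mat) k j : mmul X Umat k j = X k (S j).
Proof.
  unfold mmul. rewrite (Cseries_single _ (S j)).
  - unfold Umat. rewrite Nat.eqb_refl. ceq.
  - intros l Hl. unfold Umat. destruct (Nat.eqb_spec l (S j)); [congruence|]. ceq.
Qed.

Lemma mmul_UX (X : mat) k j : mmul Umat X (S k) j = X k j.
Proof.
  unfold mmul. rewrite (Cseries_single _ k).
  - unfold Umat. rewrite Nat.eqb_refl. ceq.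
  - intros l Hl. unfold Umat. destruct (Nat.eqb_spec (S k) (S l)); [congruence|]. ceq.
Qed.

Lemma mmul_UX0 (X : mat) j : mmul Umat X 0%nat j = C0.
Proof.
  unfold mmul. rewrite (Cseries_single _ 0%nat).
  - unfold Umat. simpl. ceq.
  - intros l Hl. unfold Umat. simpl. ceq.
Qed.

Lemma mmul_UtX (X : mat) k j : mmul Ut X k j = X (S k) j.
Proof.
  unfold mmul. rewrite (Cseries_single _ (S k)).
  - unfold Ut, madj, Umat. rewrite Nat.eqb_refl. ceq.
  - intros l Hl. unfold Ut, madj, Umat. destruct (Nat.eqb_spec l (S k)); [congruence|]. ceq.
Qed.

Lemma mmul_XUt (X : mat) k j : mmul X Ut k (S j) = X k j.
Proof.
  unfold mmul. rewrite (Cseries_single _ j).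
  - unfold Ut, madj, Umat. rewrite Nat.eqb_refl. ceq.
  - intros l Hl. unfold Ut, madj, Umat. destruct (Nat.eqb_spec (S j) (S l)); [congruence|]. ceq.
Qed.

Lemma mmul_XUt0 (X : mat) k : mmul X Ut k 0%nat = C0.
Proof.
  unfold mmul. rewrite (Cseries_single _ 0%nat).
  - unfold Ut, madj, Umat. simpl. ceq.
  - intros l Hl. unfold Ut, madj, Umat. simpl. ceq.
Qed.

Lemma mmul_DX f (X : mat) k j : mmul (diag f) X k j = Cmul (f k) (X k j).
Proof.
  unfold mmul. rewrite (Cseries_single _ k).
  - unfold diag. rewrite Nat.eqb_refl. reflexivity.
  - intros l Hl. unfold diag. destruct (Nat.eqb_spec k l); [congruence|]. ceq.
Qed.

Lemma mmul_XD f (X : mat) k j : mmul X (diag f) k j = Cmul (X k j) (f j).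
Proof.
  unfold mmul. rewrite (Cseries_single _ j).
  - unfold diag. rewrite Nat.eqb_refl. reflexivity.
  - intros l Hl. unfold diag. destruct (Nat.eqb_spec l j); [congruence|]. ceq.
Qed.

Lemma Umat_entry k j : Umat k j = if Nat.eqb k (S j) then Defs.C1 else C0.
Proof. reflexivity. Qed.

Lemma Ut_entry k j : Ut k j = if Nat.eqb j (S k) then Defs.C1 else C0.
Proof. unfold Ut, madj, Umat. destruct (Nat.eqb j (S k)); ceq. Qed.

Lemma banded_U : banded Umat 1.
Proof. intros i j H. unfold Umat. destruct (Nat.eqb_spec i (S j)); [lia|auto]. Qed.
Lemma banded_Ut : banded Ut 1.
Proof. intros i j H. rewrite Ut_entry. destruct (Nat.eqb_spec j (S i)); [lia|auto]. Qed.
Lemma banded_diag f : banded (diag f) 0.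
Proof. intros i j H. unfold diag. destruct (Nat.eqb_spec i j); [lia|auto]. Qed.

Lemma banded_add A B W : banded A W -> banded B W -> banded (madd A B) W.
Proof. intros HA HB i j H. unfold madd. rewrite HA, HB by auto. ceq. Qed.
Lemma banded_scal c A W : banded A W -> banded (mscal c A) W.
Proof. intros HA i j H. unfold mscal. rewrite HA by auto. ceq. Qed.
Lemma banded_adj A W : banded A W -> banded (madj A) W.
Proof. intros HA i j H. unfold madj. rewrite (HA j i) by lia. ceq. Qed.
Lemma banded_mul A B W1 W2 : banded A W1 -> banded B W2 -> banded (mmul A B) (W1 + W2).
Proof.
  intros HA HB i j H. rewrite (mmul_band_r A B W2 (j + W2 + 1)) by (auto; lia).
  apply csumf_zero. intros l Hl.
  destruct H.
  - rewrite HA by lia. ceq.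
  - destruct (le_lt_dec l (i + W1)). rewrite HB by lia. ceq. rewrite HA by lia. ceq.
Qed.

Lemma mmul_scall c A B W : banded B W -> mmul (mscal c A) B = mscal c (mmul A B).
Proof.
  intros HB. apply mat_ext; intros i j. unfold mscal at 2.
  rewrite !(mmul_band_r _ B W (j + W + 1)) by (auto; lia).
  rewrite <- csumf_mull. apply csumf_ext; intros. unfold mscal. ceq.
Qed.
Lemma mmul_scalr c A B W : banded A W -> mmul A (mscal c B) = mscal c (mmul A B).
Proof.
  intros HA. apply mat_ext; intros i j. unfold mscal at 2.
  rewrite !(mmul_band_l A _ W (i + W + 1)) by (auto; lia).
  rewrite <- csumf_mull. apply csumf_ext; intros. unfold mscal. ceq.
Qed.
Lemma mmul_subl A B C W : banded C W -> mmul (msub A B) C = msub (mmul A C) (mmul B C).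
Proof.
  intros HC. apply mat_ext; intros i j. unfold msub at 2.
  rewrite !(mmul_band_r _ C W (j + W + 1)) by (auto; lia).
  unfold Csub. rewrite <- csumf_opp, <- csumf_add. apply csumf_ext; intros. unfold msub. ceq.
Qed.
Lemma mmul_subr A B C W : banded A W -> mmul A (msub B C) = msub (mmul A B) (mmul A C).
Proof.
  intros HA. apply mat_ext; intros i j. unfold msub at 2.
  rewrite !(mmul_band_l A _ W (i + W + 1)) by (auto; lia).
  unfold Csub. rewrite <- csumf_opp, <- csumf_add. apply csumf_ext; intros. unfold msub. ceq.
Qed.

Lemma madj_mul A B W1 W2 : banded A W1 -> banded B W2 ->
  madj (mmul A B) = mmul (madj B) (madj A).
Proof.
  intros HA HB. apply mat_ext; intros i j. unfold madj at 1.
  rewrite (mmul_band_r A B W2 (i + j + W1 + W2 + 1)) by (auto; lia).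
  rewrite (mmul_band_r (madj B) (madj A) W1 (i + j + W1 + W2 + 1)) by (auto using banded_adj; lia).
  rewrite <- csumf_conj. apply csumf_ext; intros. unfold madj. ceq.
Qed.

Lemma madj_adj A : madj (madj A) = A.
Proof. apply mat_ext; intros. unfold madj. ceq. Qed.
Lemma madj_add A B : madj (madd A B) = madd (madj A) (madj B).
Proof. apply mat_ext; intros. unfold madj, madd. ceq. Qed.
Lemma madj_scal c A : madj (mscal c A) = mscal (Cconj c) (madj A).
Proof. apply mat_ext; intros. unfold madj, mscal. ceq. Qed.

Lemma mmul_assoc_band A B C Wa Wb Wc : banded A Wa -> banded B Wb -> banded C Wc ->
  mmul (mmul A B) C = mmul A (mmul B C).
Proof.
  intros HA HB HC. apply mat_ext; intros i j.
  set (L := (i + j + Wa + Wb + Wc + 1)%nat).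
  rewrite (mmul_band_r _ C Wc L) by (auto; lia).
  rewrite (mmul_band_l A _ Wa L) by (auto; lia).
  transitivity (csumf (fun l => csumf (fun m => Cmul (Cmul (A i m) (B m l)) (C l j)) L) L).
  - apply csumf_ext; intros l Hl. rewrite (mmul_band_l A B Wa L) by (auto; lia).
    rewrite <- csumf_mulr. reflexivity.
  - rewrite csumf_swap. apply csumf_ext; intros m Hm.
    rewrite (mmul_band_r B C Wc L) by (auto; lia).
    rewrite <- csumf_mull. apply csumf_ext; intros. ceq.
Qed.

(** * Operator-norm estimates *)

Definition rowv (M : mat) (v : nat -> CC) N k := csumf (fun j => Cmul (M k j) (v j)) N.

Lemma Cnorm2_nonneg z : 0 <= Cnorm2 z.
Proof. unfold Cnorm2. nra. Qed.
Lemma Cnorm2_mul a b : Cnorm2 (Cmul a b) = Cnorm2 a * Cnorm2 b.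
Proof. unfold Cnorm2, Cmul. simpl. ring. Qed.
Lemma Cnorm2_add a b : Cnorm2 (Cadd a b) <= 2 * Cnorm2 a + 2 * Cnorm2 b.
Proof. destruct a as [a1 a2], b as [b1 b2]. unfold Cnorm2, Cadd. simpl.
  pose proof (pow2_ge_0 (a1 - b1)). pose proof (pow2_ge_0 (a2 - b2)). nra. Qed.
Lemma Cnorm2_C0 : Cnorm2 C0 = 0.
Proof. unfold Cnorm2, C0; simpl; ring. Qed.

Lemma mat_bound_mono M r r' : r <= r' -> mat_bound M r -> mat_bound M r'.
Proof.
  intros Hr [H0 H]. split. lra. intros v N K. specialize (H v N K).
  assert (0 <= rsum (fun j => Cnorm2 (v j)) N) by (apply rsum_nonneg; intros; apply Cnorm2_nonneg).
  assert (r * r <= r' * r') by nra. nra.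
Qed.

Lemma mat_bound_zero M r : 0 <= r -> (forall i j, M i j = C0) -> mat_bound M r.
Proof.
  intros Hr H. split; auto. intros v N K.
  assert (0 <= rsum (fun j => Cnorm2 (v j)) N) by (apply rsum_nonneg; intros; apply Cnorm2_nonneg).
  rewrite (rsum_ext _ (fun _ => 0)). { assert (0 <= r * r) by nra. clear H. induction K; simpl; nra. }
  intros k _. rewrite csumf_zero. apply Cnorm2_C0. intros j _. rewrite H. ceq.
Qed.

Lemma mat_bound_add A B r s : mat_bound A r -> mat_bound B s -> mat_bound (madd A B) (2 * (r + s)).
Proof.
  intros [Hr HA] [Hs HB]. split. lra. intros v N K.
  specialize (HA v N K). specialize (HB v N K).
  eapply Rle_trans.
  { apply (rsum_le _ (fun k => 2 * Cnorm2 (csumf (fun j => Cmul (A k j) (v j)) N) +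
                          2 * Cnorm2 (csumf (fun j => Cmul (B k j) (v j)) N))).
    intros k _. replace (csumf (fun j => Cmul (madd A B k j) (v j)) N) with
      (Cadd (csumf (fun j => Cmul (A k j) (v j)) N) (csumf (fun j => Cmul (B k j) (v j)) N)).
    apply Cnorm2_add. rewrite <- csumf_add.
    apply csumf_ext. intros. unfold madd. ceq. }
  rewrite rsum_add, !rsum_scal.
  assert (0 <= rsum (fun j => Cnorm2 (v j)) N) by (apply rsum_nonneg; intros; apply Cnorm2_nonneg).
  set (V := rsum (fun j => Cnorm2 (v j)) N) in *.
  assert (0 <= (2*r*r + 2*s*s + 8*r*s) * V) by (apply Rmult_le_pos; nra).
  nra.
Qed.

Lemma mat_bound_opp A r : mat_bound A r -> mat_bound (mscal (-1, 0) A) r.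
Proof.
  intros [Hr HA]. split; auto. intros v N K. specialize (HA v N K).
  eapply Rle_trans; [|exact HA]. right. apply rsum_ext. intros k _.
  replace (csumf (fun j => Cmul (mscal (-1, 0) A k j) (v j)) N) with
    (Copp (csumf (fun j => Cmul (A k j) (v j)) N)).
  unfold Cnorm2, Copp; simpl; ring.
  rewrite <- csumf_opp. apply csumf_ext. intros. unfold mscal. ceq.
Qed.

Lemma msub_as_add A B : msub A B = madd A (mscal (-1, 0) B).
Proof. apply mat_ext; intros. unfold msub, madd, mscal. ceq. Qed.

Lemma mat_bound_sub A B r s : mat_bound A r -> mat_bound B s -> mat_bound (msub A B) (2 * (r + s)).
Proof. intros. rewrite msub_as_add. apply mat_bound_add; auto. apply mat_bound_opp; auto. Qed.

Lemma mat_bound_swap A B r : mat_bound (msub A B) r -> mat_bound (msub B A) r.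
Proof.
  intros H. apply mat_bound_opp in H.
  replace (msub B A) with (mscal (-1, 0) (msub A B)); auto.
  apply mat_ext; intros. unfold mscal, msub. ceq.
Qed.

Lemma mat_bound_mul_r Y b r s W : mat_bound Y r -> banded b W -> mat_bound b s ->
  mat_bound (mmul Y b) (r * s).
Proof.
  intros [Hr HY] Hb [Hs HB]. split. nra. intros v N K.
  set (L := (N + W + 1)%nat).
  set (w := fun l => csumf (fun j => Cmul (b l j) (v j)) N).
  specialize (HY w L K). specialize (HB v N L).
  replace (rsum (fun k => Cnorm2 (csumf (fun j => Cmul (mmul Y b k j) (v j)) N)) K)
    with (rsum (fun k => Cnorm2 (csumf (fun j => Cmul (Y k j) (w j)) L)) K).
  - assert (0 <= r * r) by nra.
    assert (rsum (fun k => Cnorm2 (csumf (fun j => Cmul (Y k j) (w j)) L)) K <= r * r * (s * s * rsum (fun j => Cnorm2 (v j)) N)).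
    { eapply Rle_trans; [exact HY|]. apply Rmult_le_compat_l; auto. }
    nra.
  - apply rsum_ext; intros k _. f_equal.
    transitivity (csumf (fun j => csumf (fun l => Cmul (Cmul (Y k l) (b l j)) (v j)) L) N).
    + unfold w. rewrite <- csumf_swap. apply csumf_ext; intros l _.
      rewrite <- csumf_mull. apply csumf_ext; intros. ceq.
    + apply csumf_ext; intros j Hj. rewrite (mmul_band_r Y b W L) by (auto; lia).
      rewrite <- csumf_mulr. reflexivity.
Qed.

Lemma mat_bound_mul_l a Y r s W : banded a W -> mat_bound a s -> mat_bound Y r ->
  mat_bound (mmul a Y) (s * r).
Proof.
  intros Ha [Hs HA] [Hr HY]. split. nra. intros v N K.
  set (L := (K + W + 1)%nat).
  set (u := fun l => csumf (fun j => Cmul (Y l j) (v j)) N).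
  specialize (HA u L K). specialize (HY v N L).
  replace (rsum (fun k => Cnorm2 (csumf (fun j => Cmul (mmul a Y k j) (v j)) N)) K)
    with (rsum (fun k => Cnorm2 (csumf (fun j => Cmul (a k j) (u j)) L)) K).
  - assert (0 <= s * s) by nra.
    assert (rsum (fun k => Cnorm2 (csumf (fun j => Cmul (a k j) (u j)) L)) K <= s * s * (r * r * rsum (fun j => Cnorm2 (v j)) N)).
    { eapply Rle_trans; [exact HA|]. apply Rmult_le_compat_l; auto. }
    nra.
  - apply rsum_ext; intros k Hk. f_equal.
    transitivity (csumf (fun j => csumf (fun l => Cmul (Cmul (a k l) (Y l j)) (v j)) L) N).
    + unfold u. rewrite <- csumf_swap. apply csumf_ext; intros l _.
      rewrite <- csumf_mull. apply csumf_ext; intros. ceq.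
    + apply csumf_ext; intros j Hj. rewrite (mmul_band_l a Y W L) by (auto; lia).
      rewrite <- csumf_mulr. reflexivity.
Qed.

Lemma rowv_single M v N k m : (forall j, j <> m -> M k j = C0) ->
  rowv M v N k = if Nat.ltb m N then Cmul (M k m) (v m) else C0.
Proof.
  intros H. unfold rowv. destruct (Nat.ltb_spec m N).
  - apply (csumf_single (fun j => Cmul (M k j) (v j))); auto. intros i Hi. rewrite H by auto. ceq.
  - apply csumf_zero. intros i Hi. rewrite H by lia. ceq.
Qed.

Lemma rsum_ind g K N : (forall i, 0 <= g i) ->
  rsum (fun k => if Nat.ltb k N then g k else 0) K <= rsum g N.
Proof.
  intros Hg. induction K; simpl. apply rsum_nonneg; auto.
  destruct (Nat.ltb_spec K N).
  - eapply Rle_trans; [|apply (rsum_mono_n g (S K) N); auto]. simpl.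
    assert (rsum (fun k => if Nat.ltb k N then g k else 0) K = rsum g K).
    { apply rsum_ext. intros i Hi. destruct (Nat.ltb_spec i N); [auto|lia]. }
    lra.
  - lra.
Qed.

Lemma mat_bound_diagonal M e : 0 <= e -> (forall i j, i <> j -> M i j = C0) ->
  (forall k, Cnorm2 (M k k) <= e * e) -> mat_bound M e.
Proof.
  intros He H0 H1. split; auto. intros v N K.
  eapply Rle_trans.
  { apply (rsum_le _ (fun k => e * e * (if Nat.ltb k N then Cnorm2 (v k) else 0))).
    intros k _. change (csumf (fun j => Cmul (M k j) (v j)) N) with (rowv M v N k).
    rewrite (rowv_single M v N k k) by (intros; apply H0; auto).
    destruct (Nat.ltb_spec k N). rewrite Cnorm2_mul. pose proof (H1 k). pose proof (Cnorm2_nonneg (v k)). nra.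
    rewrite Cnorm2_C0. nra. }
  rewrite rsum_scal. apply Rmult_le_compat_l. nra. apply rsum_ind. intros; apply Cnorm2_nonneg.
Qed.

Definition predf (f : nat -> R) (k : nat) : R := match k with 0%nat => 0 | S k' => f k' end.

Lemma rsum_predf_le f K : (forall i, 0 <= f i) -> rsum (predf f) K <= rsum f K.
Proof.
  intros Hf. destruct K. simpl; lra.
  rewrite rsum_shift. simpl. change (rsum (fun k => f k) K) with (rsum f K). pose proof (Hf K). lra.
Qed.

Lemma mat_bound_subdiag M e : 0 <= e -> (forall i j, i <> S j -> M i j = C0) ->
  (forall k, Cnorm2 (M (S k) k) <= e * e) -> mat_bound M e.
Proof.
  intros He H0 H1. split; auto. intros v N K.
  eapply Rle_trans.
  { apply (rsum_le _ (fun k => e * e * predf (fun k' => if Nat.ltb k' N then Cnorm2 (v k') else 0) k)).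
    intros k _. change (csumf (fun j => Cmul (M k j) (v j)) N) with (rowv M v N k).
    destruct k as [|k].
    - unfold rowv. rewrite csumf_zero. rewrite Cnorm2_C0. simpl. nra.
      intros j _. rewrite H0 by lia. ceq.
    - rewrite (rowv_single M v N (S k) k) by (intros; apply H0; lia). simpl.
      destruct (Nat.ltb_spec k N). rewrite Cnorm2_mul. pose proof (H1 k). pose proof (Cnorm2_nonneg (v k)). nra.
      rewrite Cnorm2_C0. nra. }
  rewrite rsum_scal. apply Rmult_le_compat_l. nra.
  eapply Rle_trans. apply rsum_predf_le. intros; destruct (Nat.ltb i N); [apply Cnorm2_nonneg|lra].
  apply rsum_ind. intros; apply Cnorm2_nonneg.
Qed.

Lemma rsum_succ_le f K N : (forall i, 0 <= f i) ->
  rsum (fun k => if Nat.ltb (S k) N then f (S k) else 0) K <= rsum f N.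
Proof.
  intros Hf. destruct N as [|N'].
  { right. simpl. transitivity (rsum (fun _ => 0) K). apply rsum_ext; intros; reflexivity.
    clear. induction K; simpl; lra. }
  set (N := S N').
  eapply Rle_trans; [|apply (rsum_mono_n f (S (Nat.pred N)) N); auto; unfold N; simpl; lia].
  eapply Rle_trans; [|right; symmetry; apply rsum_shift].
  pose proof (Hf 0%nat).
  assert (rsum (fun k => if Nat.ltb (S k) N then f (S k) else 0) K <= rsum (fun k => f (S k)) (Nat.pred N)).
  { eapply Rle_trans; [|apply (rsum_ind (fun k => f (S k)) K (Nat.pred N)); auto].
    right. apply rsum_ext. intros i _. destruct (Nat.ltb_spec (S i) N), (Nat.ltb_spec i (Nat.pred N)); auto; lia. }
  lra.
Qed.

Lemma mat_bound_superdiag M e : 0 <= e -> (forall i j, j <> S i -> M i j = C0) ->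
  (forall k, Cnorm2 (M k (S k)) <= e * e) -> mat_bound M e.
Proof.
  intros He H0 H1. split; auto. intros v N K.
  eapply Rle_trans.
  { apply (rsum_le _ (fun k => e * e * (if Nat.ltb (S k) N then Cnorm2 (v (S k)) else 0))).
    intros k _. change (csumf (fun j => Cmul (M k j) (v j)) N) with (rowv M v N k).
    rewrite (rowv_single M v N k (S k)) by (intros; apply H0; lia).
    destruct (Nat.ltb_spec (S k) N). rewrite Cnorm2_mul. pose proof (H1 k). pose proof (Cnorm2_nonneg (v (S k))). nra.
    rewrite Cnorm2_C0. nra. }
  rewrite rsum_scal. apply Rmult_le_compat_l. nra.
  apply (rsum_succ_le (fun j => Cnorm2 (v j))). intros; apply Cnorm2_nonneg.
Qed.

Definition ev (j : nat) : nat -> CC := fun i => if Nat.eqb i j then Defs.C1 else C0.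

Lemma csumf_ev (M : mat) k j n :
  csumf (fun i => Cmul (M k i) (ev j i)) n = if Nat.ltb j n then M k j else C0.
Proof.
  destruct (Nat.ltb_spec j n).
  - rewrite (csumf_single _ n j); auto. 2: { intros i Hi; unfold ev; destruct (Nat.eqb_spec i j); [congruence|ceq]. }
    unfold ev. rewrite Nat.eqb_refl. ceq.
  - apply csumf_zero. intros i Hi. unfold ev. destruct (Nat.eqb_spec i j); [lia|ceq].
Qed.

Lemma rsum_ev j n : rsum (fun i => Cnorm2 (ev j i)) n = if Nat.ltb j n then 1 else 0.
Proof.
  induction n; simpl. reflexivity.
  rewrite IHn. unfold ev. destruct (Nat.eqb_spec n j).
  - subst. destruct (Nat.ltb_spec j j); [lia|]. destruct (Nat.ltb_spec j (S j)); [|lia].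
    unfold Cnorm2, Defs.C1; simpl; ring.
  - destruct (Nat.ltb_spec j n); destruct (Nat.ltb_spec j (S n)); try lia;
    unfold Cnorm2, C0; simpl; ring.
Qed.

Lemma entry_bound M r k j : mat_bound M r -> Cnorm2 (M k j) <= r * r.
Proof.
  intros [Hr H]. specialize (H (ev j) (S j) (S k)).
  rewrite rsum_ev in H. destruct (Nat.ltb_spec j (S j)); [|lia].
  change (rsum ?f (S k)) with (rsum f k + f k) in H. cbv beta in H.
  assert (0 <= rsum (fun k0 => Cnorm2 (csumf (fun j0 => Cmul (M k0 j0) (ev j j0)) (S j))) k).
  { apply rsum_nonneg. intros; apply Cnorm2_nonneg. }
  rewrite csumf_ev in H. destruct (Nat.ltb_spec j (S j)); [|lia].
  lra.
Qed.

Lemma fst_bound z r : 0 <= r -> Cnorm2 z <= r * r -> Rabs (fst z) <= r.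
Proof. intros Hr H. unfold Cnorm2 in H. destruct z as [a b]; simpl in *. apply Rabs_le. split; nra. Qed.
Lemma snd_bound z r : 0 <= r -> Cnorm2 z <= r * r -> Rabs (snd z) <= r.
Proof. intros Hr H. unfold Cnorm2 in H. destruct z as [a b]; simpl in *. apply Rabs_le. split; nra. Qed.

Lemma Cnorm2_comp_bound z e : 0 <= e -> Rabs (fst z) <= e -> Rabs (snd z) <= e -> Cnorm2 z <= (2 * e) * (2 * e).
Proof.
  intros He H1 H2. unfold Cnorm2. destruct z as [a b]; simpl in *.
  assert (a * a <= e * e). { replace (a * a) with (Rabs a * Rabs a). pose proof (Rabs_pos a). nra.
    rewrite <- Rabs_mult. apply Rabs_pos_eq. nra. }
  assert (b * b <= e * e). { replace (b * b) with (Rabs b * Rabs b). pose proof (Rabs_pos b). nra.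
    rewrite <- Rabs_mult. apply Rabs_pos_eq. nra. }
  nra.
Qed.

Lemma mat_bound_scal c A r : mat_bound A r -> mat_bound (mscal c A) ((Rabs (fst c) + Rabs (snd c)) * r).
Proof.
  intros [Hr HA]. split. pose proof (Rabs_pos (fst c)). pose proof (Rabs_pos (snd c)). nra.
  intros v N K. specialize (HA v N K).
  assert (E : forall k, Cnorm2 (csumf (fun j => Cmul (mscal c A k j) (v j)) N) =
                        Cnorm2 c * Cnorm2 (csumf (fun j => Cmul (A k j) (v j)) N)).
  { intros k. rewrite <- Cnorm2_mul. f_equal. rewrite <- csumf_mull. apply csumf_ext. intros. unfold mscal. ceq. }
  rewrite (rsum_ext _ (fun k => Cnorm2 c * Cnorm2 (csumf (fun j => Cmul (A k j) (v j)) N))) by (intros; apply E).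
  rewrite rsum_scal.
  assert (Cnorm2 c <= (Rabs (fst c) + Rabs (snd c)) * (Rabs (fst c) + Rabs (snd c))).
  { unfold Cnorm2. destruct c as [a b]; simpl.
    replace (a * a) with (Rabs a * Rabs a) by (rewrite <- Rabs_mult; apply Rabs_pos_eq; nra).
    replace (b * b) with (Rabs b * Rabs b) by (rewrite <- Rabs_mult; apply Rabs_pos_eq; nra).
    pose proof (Rabs_pos a). pose proof (Rabs_pos b). nra. }
  pose proof (Cnorm2_nonneg c).
  assert (0 <= rsum (fun j => Cnorm2 (v j)) N) by (apply rsum_nonneg; intros; apply Cnorm2_nonneg).
  set (V := rsum (fun j => Cnorm2 (v j)) N) in *.
  set (S0 := rsum (fun k => Cnorm2 (csumf (fun j => Cmul (A k j) (v j)) N)) K) in *.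
  assert (0 <= S0) by (apply rsum_nonneg; intros; apply Cnorm2_nonneg).
  set (a := Rabs (fst c) + Rabs (snd c)) in *.
  assert (Cnorm2 c * S0 <= Cnorm2 c * (r * r * V)) by (apply Rmult_le_compat_l; auto).
  assert (Cnorm2 c * (r * r * V) <= a * a * (r * r * V)).
  { apply Rmult_le_compat_r; auto. apply Rmult_le_pos; auto. nra. }
  nra.
Qed.

(** * The gauge action and the consequences of invariance

   rho_theta multiplies the (k, j) entry by e^{i theta (k - j)}.  An invariant
   derivation commutes with rho, so if rho_theta a = e^{i q theta} a then d(a) can only
   live on the entries with k - j = q.  This pins d(U) to the subdiagonal and d(M_chi)
   to the diagonal; the Leibniz rule then kills d(M_chi) altogether and relates d(U^* )
   to d(U). *)

Lemma Cexpi_add a b : Cmul (Cexpi a) (Cexpi b) = Cexpi (a + b).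
Proof. apply CC_ext; unfold Cmul, Cexpi; simpl; rewrite ?cos_plus, ?sin_plus; ring. Qed.

Lemma Cexpi_0 : Cexpi 0 = Defs.C1.
Proof. unfold Cexpi, Defs.C1. rewrite cos_0, sin_0. reflexivity. Qed.

Lemma Cexpi_sandwich a z b : Cmul (Cmul (Cexpi a) z) (Cexpi b) = Cmul (Cexpi (a + b)) z.
Proof. apply CC_ext; unfold Cmul, Cexpi; simpl; rewrite ?cos_plus, ?sin_plus; ring. Qed.

Lemma rho_entry th A k j :
  rho th A k j = Cmul (Cmul (Cexpi (th * INR k)) (A k j)) (Cexpi (- th * INR j)).
Proof. unfold rho. rewrite mmul_XD, mmul_DX. reflexivity. Qed.

Lemma rho_U th : rho th Umat = mscal (Cexpi th) Umat.
Proof.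
  apply mat_ext; intros k j. rewrite rho_entry. unfold mscal. rewrite Umat_entry.
  destruct (Nat.eqb_spec k (S j)).
  - subst. rewrite Cexpi_sandwich. f_equal. f_equal. rewrite S_INR. ring.
  - ceq.
Qed.

Lemma rho_Ut th : rho th Ut = mscal (Cexpi (- th)) Ut.
Proof.
  apply mat_ext; intros k j. rewrite rho_entry. unfold mscal. rewrite Ut_entry.
  destruct (Nat.eqb_spec j (S k)).
  - subst. rewrite Cexpi_sandwich. f_equal. f_equal. rewrite S_INR. ring.
  - ceq.
Qed.

Lemma rho_diag th f : rho th (diag f) = diag f.
Proof.
  apply mat_ext; intros k j. rewrite rho_entry. unfold diag.
  destruct (Nat.eqb_spec k j).
  - subst. rewrite Cexpi_sandwich. replace (th * INR j + - th * INR j) with 0 by ring.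
    rewrite Cexpi_0. ceq.
  - ceq.
Qed.

Lemma fourier_zero z m : m <> 0 -> (forall th, Cmul (Cexpi (th * m)) z = z) -> z = C0.
Proof.
  intros Hm H. specialize (H (PI / m)).
  replace (PI / m * m) with PI in H by (field; auto).
  unfold Cexpi, Cmul in H. rewrite cos_PI, sin_PI in H.
  destruct z as [a b]. simpl in H. injection H. intros. unfold C0. f_equal; lra.
Qed.

Lemma covariance_entries (Y : mat) (q : R) :
  (forall th, rho (- th) (mscal (Cexpi (q * th)) Y) = Y) ->
  forall k j, q + INR j - INR k <> 0 -> Y k j = C0.
Proof.
  intros H k j Hne. apply (fourier_zero _ (q + INR j - INR k) Hne).
  intros th. specialize (H th).
  pose proof (f_equal (fun M => M k j) H) as E. simpl in E.
  rewrite rho_entry in E. unfold mscal in E.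
  rewrite <- E at 2. rewrite Cexpi_sandwich.
  replace (Cmul (Cexpi (- th * INR k + - - th * INR j)) (Cmul (Cexpi (q * th)) (Y k j))) with
    (Cmul (Cmul (Cexpi (- th * INR k + - - th * INR j)) (Cexpi (q * th))) (Y k j)) by ceq.
  rewrite Cexpi_add. f_equal. f_equal. ring.
Qed.

Lemma mscal_one A : mscal Defs.C1 A = A.
Proof. apply mat_ext; intros. unfold mscal. ceq. Qed.

Lemma trivial_char {G : CAGroup} : @character G (fun _ => Defs.C1).
Proof.
  split; [|split].
  - intros x eps He. exists (fun _ => True). split; [apply open_full|split; auto].
    intros. unfold Cabs, Cnorm2, Csub, Cadd, Copp, Defs.C1; simpl.
    replace ((1 + - (1)) * (1 + - (1)) + (0 + - (0)) * (0 + - (0))) with 0 by ring. rewrite sqrt_0. lra.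
  - intros x. unfold Cabs, Cnorm2, Defs.C1; simpl. replace (1 * 1 + 0 * 0) with 1 by ring. apply sqrt_1.
  - intros. ceq.
Qed.

Lemma inAA_U {G : CAGroup} (x1 : G) : inAA x1 Umat.
Proof. apply sa_gen. left; reflexivity. Qed.
Lemma inAA_Ut {G : CAGroup} (x1 : G) : inAA x1 Ut.
Proof. apply sa_gen. right; left; reflexivity. Qed.
Lemma inAA_M {G : CAGroup} (x1 : G) chi : character chi -> inAA x1 (Mf x1 chi).
Proof. intros H. apply sa_gen. right; right. exists chi; auto. Qed.
Lemma inAA_I {G : CAGroup} (x1 : G) : inAA x1 Iden.
Proof. apply (inAA_M x1 (fun _ => Defs.C1)). apply trivial_char. Qed.

Lemma inAA_banded {G : CAGroup} (x1 : G) a : inAA x1 a -> exists W, banded a W.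
Proof.
  induction 1.
  - destruct H as [->|[->|[chi [_ ->]]]]. exists 1%nat; apply banded_U. exists 1%nat; apply banded_Ut.
    exists 0%nat; apply banded_diag.
  - destruct IHstar_alg1 as [W1 H1], IHstar_alg2 as [W2 H2]. exists (W1 + W2)%nat.
    apply banded_add; [apply (banded_mono _ W1)|apply (banded_mono _ W2)]; auto; lia.
  - destruct IHstar_alg as [W H1]. exists W. apply banded_scal; auto.
  - destruct IHstar_alg1 as [W1 H1], IHstar_alg2 as [W2 H2]. exists (W1 + W2)%nat. apply banded_mul; auto.
  - destruct IHstar_alg as [W H1]. exists W. apply banded_adj; auto.
Qed.

Lemma char_norm {G : CAGroup} (chi : G -> CC) y : character chi -> Cnorm2 (chi y) = 1.
Proof.
  intros [_ [Habs _]]. specialize (Habs y). unfold Cabs in Habs.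
  rewrite <- (sqrt_def (Cnorm2 (chi y))) by apply Cnorm2_nonneg. rewrite Habs. ring.
Qed.

Lemma char_zero {G : CAGroup} (chi : G -> CC) : character chi -> chi g0 = Defs.C1.
Proof.
  intros Hc. pose proof (char_norm chi g0 Hc) as Hn. destruct Hc as [_ [_ Hm]].
  specialize (Hm g0 g0). rewrite gadd0 in Hm.
  destruct (chi g0) as [a b]. unfold Cmul, Cnorm2 in *. simpl in *. injection Hm. intros Hb Ha.
  assert (b = 0 \/ a = 1/2) by (assert (b * (2 * a - 1) = 0) by lra; apply Rmult_integral in H; lra).
  destruct H.
  - subst. assert (a * (a - 1) = 0) by lra. apply Rmult_integral in H. destruct H.
    + subst. lra.
    + unfold Defs.C1. f_equal. lra.
  - subst. nra.
Qed.

Lemma char_succ {G : CAGroup} (x1 : G) chi k : character chi ->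
  chi (nmul (S k) x1) = Cmul (chi (nmul k x1)) (chi x1).
Proof. intros [_ [_ Hm]]. simpl. apply Hm. Qed.

Lemma Mchi_U_comm {G : CAGroup} (x1 : G) chi : character chi ->
  mmul (Mf x1 chi) Umat = mscal (chi x1) (mmul Umat (Mf x1 chi)).
Proof.
  intros Hc. apply mat_ext; intros k j. unfold Mf, mscal. rewrite mmul_DX, mmul_XD, !Umat_entry.
  destruct (Nat.eqb_spec k (S j)). subst. rewrite char_succ by auto. ceq. ceq.
Qed.

(* The rank-one projection onto E_0, an element of calA fixed by every M_chi. *)
Definition P0 : mat := madd Iden (mscal (-1, 0) (mmul Umat Ut)).

Lemma P0_entry k j : P0 k j = if andb (Nat.eqb k 0) (Nat.eqb j 0) then Defs.C1 else C0.
Proof.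
  unfold P0, madd, mscal, Iden, diag. destruct k as [|k].
  - rewrite mmul_UX0. destruct j; simpl; ceq.
  - rewrite mmul_UX, Ut_entry. change (andb (Nat.eqb (S k) 0) (Nat.eqb j 0)) with false. cbv iota.
    destruct (Nat.eqb_spec (S k) j) as [e|e]; destruct (Nat.eqb_spec j (S k)) as [e'|e']; try lia; ceq.
Qed.

Lemma inAA_P0 {G : CAGroup} (x1 : G) : inAA x1 P0.
Proof. apply sa_add. apply inAA_I. apply sa_scal. apply sa_mul. apply inAA_U. apply inAA_Ut. Qed.

Lemma P0_Mchi {G : CAGroup} (x1 : G) chi : character chi -> mmul P0 (Mf x1 chi) = P0.
Proof.
  intros Hc. apply mat_ext; intros k j. unfold Mf. rewrite mmul_XD, P0_entry.
  destruct (Nat.eqb k 0); destruct j; simpl; try ceq. rewrite char_zero by auto. ceq.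
Qed.

Lemma UtU : mmul Ut Umat = Iden.
Proof.
  apply mat_ext; intros k j. rewrite mmul_XU, Ut_entry. unfold Iden, diag.
  destruct (Nat.eqb_spec (S j) (S k)), (Nat.eqb_spec k j); try lia; auto.
Qed.

Lemma Cadd_cancel X W Z : Cadd X W = Z -> X = Cadd Z (Copp W).
Proof. intros <-. ceq. Qed.

Section Invariance.
Context {G : CAGroup} (x1 : G) (d : mat -> mat).
Hypotheses (Hder : is_derivation x1 d) (Hinv : invariant x1 d).

Lemma invariant_support a q : inAA x1 a ->
  (forall th, rho th a = mscal (Cexpi (q * th)) a) ->
  forall k j, q + INR j - INR k <> 0 -> d a k j = C0.
Proof.
  intros Ha Hrho. destruct Hder as [_ [_ [Hsc _]]].
  apply (covariance_entries (d a) q). intros th.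
  specialize (Hinv th a Ha). rewrite Hrho, Hsc in Hinv by exact Ha.
  rewrite Hinv. replace (- IZR 0 * th) with 0 by (simpl; ring). rewrite Cexpi_0. apply mscal_one.
Qed.

Lemma dU_shape k j : k <> S j -> d Umat k j = C0.
Proof.
  intros Hkj. apply (invariant_support Umat 1 (inAA_U x1)).
  - intros th. rewrite Rmult_1_l. apply rho_U.
  - intros H. apply Hkj, INR_eq. rewrite S_INR. lra.
Qed.

Lemma dUt_shape k j : j <> S k -> d Ut k j = C0.
Proof.
  intros Hkj. apply (invariant_support Ut (-1) (inAA_Ut x1)).
  - intros th. replace (-1 * th) with (- th) by ring. apply rho_Ut.
  - intros H. apply Hkj, INR_eq. rewrite S_INR. lra.
Qed.

Lemma dM_shape chi : character chi -> forall k j, k <> j -> d (Mf x1 chi) k j = C0.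
Proof.
  intros Hc k j Hkj. apply (invariant_support (Mf x1 chi) 0 (inAA_M x1 chi Hc)).
  - intros th. rewrite Rmult_0_l, Cexpi_0, mscal_one. apply rho_diag.
  - intros H. apply Hkj, INR_eq. lra.
Qed.

(* ... and its diagonal satisfies D_{k+1,k+1} = chi(x_1) D_{k,k}, by the Leibniz rule
   applied to M_chi U = chi(x_1) U M_chi ... *)
Lemma dM_diag_step chi : character chi -> forall k,
  d (Mf x1 chi) (S k) (S k) = Cmul (chi x1) (d (Mf x1 chi) k k).
Proof.
  intros Hc k. destruct Hder as [_ [_ [Hsc Hmul]]].
  assert (HM : inAA x1 (Mf x1 chi)) by (apply inAA_M; auto).
  pose proof (f_equal d (Mchi_U_comm x1 chi Hc)) as E.
  rewrite Hmul in E by (auto using inAA_U).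
  rewrite Hsc in E by exact (sa_mul _ _ _ (inAA_U x1) HM).
  rewrite Hmul in E by (auto using inAA_U).
  pose proof (f_equal (fun A => A (S k) k) E) as E'. simpl in E'. unfold madd, mscal in E'.
  set (D := d (Mf x1 chi)) in *.
  rewrite mmul_XU, mmul_UX in E'. unfold Mf in E'. rewrite mmul_DX, mmul_XD in E'.
  rewrite char_succ in E' by auto.
  apply Cadd_cancel in E'. rewrite E'. ceq.
Qed.

(* ... and D_{0,0} = 0, by the Leibniz rule applied to P0 M_chi = P0. *)
Lemma dM_corner chi : character chi -> d (Mf x1 chi) 0%nat 0%nat = C0.
Proof.
  intros Hc. destruct Hder as [_ [_ [_ Hmul]]].
  pose proof (f_equal d (P0_Mchi x1 chi Hc)) as E. rewrite Hmul in E by (auto using inAA_P0, inAA_M).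
  pose proof (f_equal (fun A => A 0%nat 0%nat) E) as E'. simpl in E'. unfold madd in E'.
  unfold Mf at 1 in E'. rewrite mmul_XD in E'. simpl in E'. rewrite char_zero in E' by auto.
  unfold mmul in E'. rewrite (Cseries_single _ 0%nat) in E'.
  - rewrite P0_entry in E'. simpl in E'. destruct (d P0 0%nat 0%nat), (d (Mf x1 chi) 0%nat 0%nat).
    unfold Cadd, Cmul, Defs.C1 in E'. simpl in E'. injection E'. intros. unfold C0. f_equal; lra.
  - intros l Hl. rewrite P0_entry. destruct l; [congruence|]. simpl. ceq.
Qed.

Lemma dM_zero chi : character chi -> forall k j, d (Mf x1 chi) k j = C0.
Proof.
  intros Hc k j. destruct (Nat.eq_dec k j) as [<-|Hkj]; [|apply dM_shape; auto].
  induction k. apply dM_corner; auto. rewrite dM_diag_step, IHk by auto. ceq.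
Qed.

(* d(U^* ) is determined by d(U): differentiate U^* U = 1. *)
Lemma dUt_entry k : d Ut k (S k) = Copp (d Umat (S k) k).
Proof.
  pose proof Hder as [_ [_ [_ Hmul]]].
  pose proof (f_equal d UtU) as E. rewrite Hmul in E by (auto using inAA_U, inAA_Ut).
  pose proof (f_equal (fun A => A k k) E) as E'. simpl in E'. unfold madd in E'.
  rewrite mmul_XU, mmul_UtX in E'. rewrite (dM_zero (fun _ => Defs.C1) trivial_char) in E'.
  apply Cadd_cancel in E'. rewrite E'. ceq.
Qed.

End Invariance.

(** * Topology of G *)

Lemma opens_ext {G : CAGroup} (P Q : G -> Prop) : opens P -> (forall x, P x <-> Q x) -> opens Q.
Proof.
  intros HP H. replace Q with P; auto. apply functional_extensionality; intro x.
  apply propositional_extensionality. apply H.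
Qed.

Lemma open_nbhd {G : CAGroup} (S : G -> Prop) :
  (forall x, S x -> exists U, opens U /\ U x /\ forall y, U y -> S y) -> opens S.
Proof.
  intros H. apply (opens_ext (fun x => exists U, (opens U /\ forall y, U y -> S y) /\ U x)).
  - apply open_union. intros U [HU _]; auto.
  - intros x; split.
    + intros [U [[_ HU] Hx]]. auto.
    + intros Hx. destruct (H x Hx) as [U [HU [HUx HUS]]]. exists U. auto.
Qed.

Lemma open_trans {G : CAGroup} (V : G -> Prop) a : opens V -> opens (fun y => V (gadd y a)).
Proof.
  intros HV. apply open_nbhd. intros x Hx.
  destruct (gadd_cont G x a V HV Hx) as [U [W [HU [HW [HUx [HWa HUW]]]]]].
  exists U. split; [exact HU|split; [exact HUx|]]. intros y Hy. apply HUW; auto.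
Qed.

Lemma open_transl {G : CAGroup} (V : G -> Prop) a : opens V -> opens (fun y => V (gadd a y)).
Proof.
  intros HV. apply (opens_ext (fun y => V (gadd y a))). apply open_trans; auto.
  intros; rewrite gaddC; tauto.
Qed.

Lemma gadd0l {G : CAGroup} (x : G) : gadd g0 x = x.
Proof. rewrite gaddC. apply gadd0. Qed.
Lemma gaddNl {G : CAGroup} (x : G) : gadd (gopp x) x = g0.
Proof. rewrite gaddC. apply gaddN. Qed.

Lemma nmul_add {G : CAGroup} (x : G) a b : nmul (a + b) x = gadd (nmul a x) (nmul b x).
Proof.
  induction b. rewrite Nat.add_0_r. simpl. rewrite gadd0. auto.
  rewrite Nat.add_succ_r. simpl. rewrite IHb. rewrite gaddA. auto.
Qed.

Lemma nmul_diff {G : CAGroup} (x : G) i j :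
  nmul i x = gadd (nmul j x) (zmul (Z.of_nat i - Z.of_nat j) x).
Proof.
  destruct (le_lt_dec j i).
  - replace (Z.of_nat i - Z.of_nat j)%Z with (Z.of_nat (i - j)) by lia.
    destruct (i - j)%nat eqn:E.
    + simpl. rewrite gadd0. f_equal. lia.
    + change (Z.of_nat (S n)) with (Z.pos (Pos.of_succ_nat n)). unfold zmul.
      rewrite SuccNat2Pos.id_succ. rewrite <- E. rewrite <- nmul_add. f_equal. lia.
  - replace (Z.of_nat i - Z.of_nat j)%Z with (Z.neg (Pos.of_succ_nat (j - i - 1))).
    + unfold zmul. rewrite SuccNat2Pos.id_succ.
      replace j with (i + S (j - i - 1))%nat at 1 by lia. rewrite nmul_add.
      rewrite <- gaddA, gaddN, gadd0. auto.
    + rewrite <- Pos2Z.opp_pos. rewrite Znat.Zpos_P_of_succ_nat. lia.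
Qed.

(* Continuity tested componentwise; equivalent to [continuousC] and more convenient
   for arithmetic. *)
Definition contR {G : CAGroup} (f : G -> CC) : Prop :=
  forall x eps, eps > 0 -> exists U, opens U /\ U x /\ forall y, U y ->
    Rabs (fst (f y) - fst (f x)) < eps /\ Rabs (snd (f y) - snd (f x)) < eps.

Lemma fst_le_Cabs z : Rabs (fst z) <= Cabs z.
Proof.
  unfold Cabs, Cnorm2. rewrite <- sqrt_Rsqr_abs. apply sqrt_le_1_alt. unfold Rsqr. destruct z; simpl. nra.
Qed.
Lemma snd_le_Cabs z : Rabs (snd z) <= Cabs z.
Proof.
  unfold Cabs, Cnorm2. rewrite <- sqrt_Rsqr_abs. apply sqrt_le_1_alt. unfold Rsqr. destruct z; simpl. nra.
Qed.
Lemma Cabs_lt z e : e > 0 -> Rabs (fst z) < e / 2 -> Rabs (snd z) < e / 2 -> Cabs z < e.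
Proof.
  intros He H1 H2. unfold Cabs. rewrite <- (sqrt_Rsqr e) by lra. apply sqrt_lt_1_alt. split.
  unfold Cnorm2; nra.
  unfold Cnorm2, Rsqr. destruct z as [a b]; simpl in *.
  apply Rabs_def2 in H1. apply Rabs_def2 in H2. nra.
Qed.

Lemma contC_R {G : CAGroup} (f : G -> CC) : continuousC f -> contR f.
Proof.
  intros H x eps He. destruct (H x eps He) as [U [HU [Hx HUy]]]. exists U. split; [auto|split; [auto|]].
  intros y Hy. specialize (HUy y Hy). split.
  - pose proof (fst_le_Cabs (Csub (f y) (f x))).
    replace (fst (f y) - fst (f x)) with (fst (Csub (f y) (f x))) by (unfold Csub, Cadd, Copp; simpl; ring). lra.
  - pose proof (snd_le_Cabs (Csub (f y) (f x))).
    replace (snd (f y) - snd (f x)) with (snd (Csub (f y) (f x))) by (unfold Csub, Cadd, Copp; simpl; ring). lra.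
Qed.

Lemma contR_C {G : CAGroup} (f : G -> CC) : contR f -> continuousC f.
Proof.
  intros H x eps He. destruct (H x (eps / 2)) as [U [HU [Hx HUy]]]. lra.
  exists U. split; [auto|split; [auto|]]. intros y Hy. destruct (HUy y Hy). apply Cabs_lt; auto.

Qed.

Lemma contR_const {G : CAGroup} (c : CC) : @contR G (fun _ => c).
Proof.
  intros x eps He. exists (fun _ => True). split. apply open_full. split; auto.
  intros. rewrite !Rminus_diag, Rabs_R0. lra.
Qed.

Lemma contR_add {G : CAGroup} (f g : G -> CC) : contR f -> contR g -> contR (fun y => Cadd (f y) (g y)).
Proof.
  intros Hf Hg x eps He. destruct (Hf x (eps/2)) as [U [HU [HUx HUy]]]. lra.
  destruct (Hg x (eps/2)) as [V [HV [HVx HVy]]]. lra.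
  exists (fun y => U y /\ V y). split; [apply open_inter; auto|split; [auto|]].
  intros y [Hy1 Hy2]. destruct (HUy y Hy1), (HVy y Hy2). unfold Cadd; simpl.
  split.
  - replace (_ - _) with ((fst (f y) - fst (f x)) + (fst (g y) - fst (g x))) by ring.
    eapply Rle_lt_trans. apply Rabs_triang. lra.
  - replace (_ - _) with ((snd (f y) - snd (f x)) + (snd (g y) - snd (g x))) by ring.
    eapply Rle_lt_trans. apply Rabs_triang. lra.
Qed.

Lemma real_mul_cont a a0 b b0 d : 0 <= d <= 1 -> Rabs (a - a0) < d -> Rabs (b - b0) < d ->
  Rabs (a * b - a0 * b0) <= (Rabs a0 + Rabs b0 + 1) * d.
Proof.
  intros Hd Ha Hb.
  replace (a * b - a0 * b0) with (a * (b - b0) + b0 * (a - a0)) by ring.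
  eapply Rle_trans. apply Rabs_triang. rewrite !Rabs_mult.
  assert (Rabs a <= Rabs a0 + 1).
  { replace a with (a0 + (a - a0)) by ring. eapply Rle_trans. apply Rabs_triang. lra. }
  pose proof (Rabs_pos (b - b0)). pose proof (Rabs_pos (a - a0)). pose proof (Rabs_pos b0). pose proof (Rabs_pos a0).
  nra.
Qed.

Lemma contR_mul {G : CAGroup} (f g : G -> CC) : contR f -> contR g -> contR (fun y => Cmul (f y) (g y)).
Proof.
  intros Hf Hg x eps He.
  set (A := Rabs (fst (f x)) + Rabs (snd (f x)) + Rabs (fst (g x)) + Rabs (snd (g x)) + 1).
  assert (HA : A >= 1) by (unfold A; pose proof (Rabs_pos (fst (f x))); pose proof (Rabs_pos (snd (f x)));
    pose proof (Rabs_pos (fst (g x))); pose proof (Rabs_pos (snd (g x))); lra).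
  set (d := Rmin 1 (eps / (4 * A))).
  assert (Hd : 0 < d <= 1). { unfold d. split. apply Rmin_glb_lt. lra. apply Rdiv_lt_0_compat; lra. apply Rmin_l. }
  assert (Hd2 : d * A <= eps / 4).
  { unfold d. eapply Rle_trans. apply Rmult_le_compat_r. lra. apply Rmin_r. right. field. lra. }
  destruct (Hf x d) as [U [HU [HUx HUy]]]. lra.
  destruct (Hg x d) as [V [HV [HVx HVy]]]. lra.
  exists (fun y => U y /\ V y). split; [apply open_inter; auto|split; [auto|]].
  intros y [Hy1 Hy2]. destruct (HUy y Hy1) as [F1 F2]. destruct (HVy y Hy2) as [G1 G2]. unfold Cmul; simpl.
  pose proof (real_mul_cont _ _ _ _ d ltac:(lra) F1 G1).
  pose proof (real_mul_cont _ _ _ _ d ltac:(lra) F2 G2).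
  pose proof (real_mul_cont _ _ _ _ d ltac:(lra) F1 G2).
  pose proof (real_mul_cont _ _ _ _ d ltac:(lra) F2 G1).
  assert (Hb : forall p q, Rabs p + Rabs q + 1 <= A -> (Rabs p + Rabs q + 1) * d <= eps / 4).
  { intros p q Hpq. eapply Rle_trans; [|exact Hd2]. rewrite (Rmult_comm d). apply Rmult_le_compat_r; lra. }
  unfold A in Hb.
  pose proof (Rabs_pos (fst (f x))). pose proof (Rabs_pos (snd (f x))).
  pose proof (Rabs_pos (fst (g x))). pose proof (Rabs_pos (snd (g x))).
  split.
  - replace (_ - _) with ((fst (f y) * fst (g y) - fst (f x) * fst (g x)) - (snd (f y) * snd (g y) - snd (f x) * snd (g x))) by ring.
    eapply Rle_lt_trans. unfold Rminus at 1. apply Rabs_triang. rewrite Rabs_Ropp.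
    pose proof (Hb (fst (f x)) (fst (g x)) ltac:(lra)). pose proof (Hb (snd (f x)) (snd (g x)) ltac:(lra)). lra.
  - replace (_ - _) with ((fst (f y) * snd (g y) - fst (f x) * snd (g x)) + (snd (f y) * fst (g y) - snd (f x) * fst (g x))) by ring.
    eapply Rle_lt_trans. apply Rabs_triang.
    pose proof (Hb (fst (f x)) (snd (g x)) ltac:(lra)). pose proof (Hb (snd (f x)) (fst (g x)) ltac:(lra)). lra.
Qed.

Lemma contR_conj {G : CAGroup} (f : G -> CC) : contR f -> contR (fun y => Cconj (f y)).
Proof.
  intros Hf x eps He. destruct (Hf x eps He) as [U [HU [HUx HUy]]]. exists U. split; [auto|split; [auto|]].
  intros y Hy. split.
  - apply HUy; auto.
  - unfold Cconj; simpl. replace (- snd (f y) - - snd (f x)) with (- (snd (f y) - snd (f x))) by ring.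
    rewrite Rabs_Ropp. apply HUy; auto.
Qed.

Lemma contR_trans {G : CAGroup} (f : G -> CC) a : contR f -> contR (fun y => f (gadd y a)).
Proof.
  intros Hf x eps He. destruct (Hf (gadd x a) eps He) as [U [HU [HUx HUy]]].
  exists (fun y => U (gadd y a)). split; [apply open_trans; auto|split; [auto|]].
  intros y Hy. apply HUy; auto.
Qed.

Lemma contR_csumf {G : CAGroup} (f : nat -> G -> CC) n :
  (forall i, contR (f i)) -> contR (fun y => csumf (fun i => f i y) n).
Proof.
  intros H. induction n; simpl. apply contR_const. apply contR_add; auto.
Qed.

Lemma finite_subcover {G : CAGroup} (O : G -> G -> Prop) :
  (forall x, opens (O x) /\ O x x) -> exists xs : list G, forall y, exists x, In x xs /\ O x y.
Proof.
  intros HO.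
  destruct (Defs.compact G (fun U => exists x, U = O x)) as [l [Hl Hcov]].
  - intros U [x ->]. apply HO.
  - intros x. exists (O x). split; [exists x; auto|apply HO].
  - exists (map (fun U => epsilon (inhabits g0) (fun x => U = O x)) l).
    intros y. destruct (Hcov y) as [U [HUl HUy]].
    exists (epsilon (inhabits g0) (fun x => U = O x)). split.
    + apply (in_map (fun U => epsilon (inhabits g0) (fun x => U = O x))). auto.
    + pose proof (epsilon_spec (inhabits g0) (fun x => U = O x) (Hl U HUl)). simpl in H. rewrite <- H. auto.
Qed.

Lemma open_list_inter {G : CAGroup} (xs : list G) (B : G -> G -> Prop) :
  (forall x, opens (B x)) -> opens (fun v => forall x, In x xs -> B x v).
Proof.
  intros HB. induction xs.
  - apply (opens_ext (fun _ => True)). apply open_full. intros; split; simpl; tauto.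
  - apply (opens_ext (fun v => B a v /\ forall x, In x xs -> B x v)).
    + apply open_inter; auto.
    + intros v; split.
      * intros [H1 H2] x [<-|Hx]; auto.
      * intros H. split. apply H; left; auto. intros; apply H; right; auto.
Qed.

Lemma unif_cont {G : CAGroup} (g : G -> CC) : contR g -> forall eps, eps > 0 ->
  exists V, opens V /\ V g0 /\ forall y v, V v ->
    Rabs (fst (g (gadd y v)) - fst (g y)) <= eps /\ Rabs (snd (g (gadd y v)) - snd (g y)) <= eps.
Proof.
  intros Hg eps He.
  assert (Hx : forall x, exists p : (G -> Prop) * (G -> Prop), opens (fst p) /\ opens (snd p) /\ fst p x /\ snd p g0 /\
    forall u v, fst p u -> snd p v ->
      Rabs (fst (g (gadd u v)) - fst (g x)) < eps / 2 /\ Rabs (snd (g (gadd u v)) - snd (g x)) < eps / 2).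
  { intros x. destruct (Hg x (eps / 2)) as [U [HU [HUx HUy]]]. lra.
    destruct (gadd_cont G x g0 U HU) as [A [B [HA [HB [HAx [HB0 HAB]]]]]]. rewrite gadd0. auto.
    exists (A, B). simpl. split; [auto|split; [auto|split; [auto|split; [auto|]]]]. intros u v Hu Hv; split; apply HUy; apply HAB; auto. }
  destruct (choice_fun _ (inhabits ((fun _ => True), (fun _ => True))) Hx) as [p Hp].
  destruct (finite_subcover (fun x => fst (p x))) as [xs Hxs].
  { intros x. destruct (Hp x) as [H1 [_ [H3 _]]]. auto. }
  exists (fun v => forall x, In x xs -> snd (p x) v). split; [|split].
  - apply open_list_inter. intros x. apply (Hp x).
  - intros x _. apply (Hp x).
  - intros y v Hv. destruct (Hxs y) as [x [Hin Hy]].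
    destruct (Hp x) as [_ [_ [_ [H0 HH]]]].
    destruct (HH y v Hy (Hv x Hin)). destruct (HH y g0 Hy H0). rewrite gadd0 in *.
    split.
    + replace (_ - _) with ((fst (g (gadd y v)) - fst (g x)) - (fst (g y) - fst (g x))) by ring.
      eapply Rle_trans. unfold Rminus at 1. apply Rabs_triang. rewrite Rabs_Ropp. lra.
    + replace (_ - _) with ((snd (g (gadd y v)) - snd (g x)) - (snd (g y) - snd (g x))) by ring.
      eapply Rle_trans. unfold Rminus at 1. apply Rabs_triang. rewrite Rabs_Ropp. lra.
Qed.

Lemma cont_bounded {G : CAGroup} (g : G -> CC) : contR g ->
  exists S, 0 <= S /\ forall y, Rabs (fst (g y)) <= S /\ Rabs (snd (g y)) <= S.
Proof.
  intros Hg.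
  assert (Hx : forall x, exists U, opens U /\ U x /\ forall y, U y ->
     Rabs (fst (g y) - fst (g x)) < 1 /\ Rabs (snd (g y) - snd (g x)) < 1).
  { intros x. apply Hg. lra. }
  destruct (choice_fun _ (inhabits (fun _ : G => True)) Hx) as [U HU].
  destruct (finite_subcover U) as [xs Hxs]. { intros x. destruct (HU x); tauto. }
  set (S := fold_right (fun x acc => acc + Rabs (fst (g x)) + Rabs (snd (g x))) 1 xs).
  assert (HS : forall x, In x xs -> Rabs (fst (g x)) + 1 <= S /\ Rabs (snd (g x)) + 1 <= S).
  { unfold S. clear. induction xs; simpl. tauto.
    assert (1 <= fold_right (fun x acc => acc + Rabs (fst (g x)) + Rabs (snd (g x))) 1 xs).
    { clear. induction xs; simpl. lra. pose proof (Rabs_pos (fst (g a))). pose proof (Rabs_pos (snd (g a))). lra. }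
    intros x [->|Hx].
    - pose proof (Rabs_pos (fst (g x))). pose proof (Rabs_pos (snd (g x))). lra.
    - destruct (IHxs x Hx). pose proof (Rabs_pos (fst (g a))). pose proof (Rabs_pos (snd (g a))). lra. }
  exists S. split.
  { unfold S. clear. induction xs; simpl. lra. pose proof (Rabs_pos (fst (g a))). pose proof (Rabs_pos (snd (g a))). lra. }
  intros y. destruct (Hxs y) as [x [Hin Hy]]. destruct (HU x) as [_ [_ HH]]. destruct (HH y Hy).
  destruct (HS x Hin).
  split.
  - replace (fst (g y)) with (fst (g x) + (fst (g y) - fst (g x))) by ring.
    eapply Rle_trans. apply Rabs_triang. lra.
  - replace (snd (g y)) with (snd (g x) + (snd (g y) - snd (g x))) by ring.
    eapply Rle_trans. apply Rabs_triang. lra.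
Qed.

(* Since the orbit is dense and G is compact, the return times of (x_k) to a
   neighbourhood V of 0 form a relatively dense set: every k is within M of one. *)
Lemma orbit_cover {G : CAGroup} (x1 : G) (V : G -> Prop) : dense_cyclic G x1 -> opens V -> V g0 ->
  exists M : nat, forall k, exists m, (m <= k + M)%nat /\ (k <= m + M)%nat /\ V (nmul m x1).
Proof.
  intros Hd HV H0.
  assert (Hy : forall y, exists n : Z, V (gadd (zmul n x1) y)).
  { intros y. apply (Hd (fun w => V (gadd w y))). apply open_trans; auto.
    exists (gopp y). rewrite gaddNl. auto. }
  destruct (choice_fun _ (inhabits 0%Z) Hy) as [n Hn].
  destruct (finite_subcover (fun y w => V (gadd (zmul (n y) x1) w))) as [xs Hxs].
  { intros y. split. apply open_transl; auto. apply Hn. }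
  set (M := fold_right (fun y acc => (acc + Z.abs_nat (n y))%nat) 0%nat xs).
  assert (HM : forall y, In y xs -> (Z.abs_nat (n y) <= M)%nat).
  { unfold M. clear. induction xs; simpl. tauto. intros y [<-|Hy]. lia. specialize (IHxs y Hy). lia. }
  exists M. intros k. destruct (Hxs (nmul k x1)) as [y [Hin Hyk]]. specialize (HM y Hin).
  destruct (n y) as [|p|p] eqn:E.
  - exists k. simpl in Hyk. rewrite gadd0l in Hyk. split; [lia|split; [lia|auto]].
  - exists (k + Pos.to_nat p)%nat. simpl in HM.
    split; [lia|split; [lia|]]. rewrite nmul_add. rewrite gaddC. auto.
  - simpl in HM. simpl in Hyk.
    destruct (le_lt_dec (Pos.to_nat p) k).
    + exists (k - Pos.to_nat p)%nat. split; [lia|split; [lia|]].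
      replace k with (Pos.to_nat p + (k - Pos.to_nat p))%nat in Hyk by lia.
      rewrite nmul_add, gaddA, gaddNl, gadd0l in Hyk. auto.
    + exists 0%nat. split; [lia|split; [lia|]]. simpl. auto.
Qed.

(** * Averages of almost periodic sequences

   For a bounded almost periodic sequence the Cesaro averages
   over windows of length N converge to a limit c uniformly in the position k of the
   window.  The sequences k |-> g(x_k), g continuous on G, are of this kind. *)

Definition AP (s : nat -> R) : Prop :=
  forall eps, eps > 0 -> exists M : nat, forall k, exists m,
    (m <= k + M)%nat /\ (k <= m + M)%nat /\ forall i, Rabs (s (m + i)%nat - s i) <= eps.

Definition Avg (s : nat -> R) (N k : nat) : R := rsum (fun i => s (k + i)%nat) N / INR N.

Lemma shift_bound s S0 k t N : (forall i, Rabs (s i) <= S0) ->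
  Rabs (rsum (fun i => s (k + t + i)%nat) N - rsum (fun i => s (k + i)%nat) N) <= 2 * S0 * INR t.
Proof.
  intros Hs. induction t.
  - rewrite Nat.add_0_r. simpl. replace (_ - _) with 0 by ring. rewrite Rabs_R0. lra.
  - rewrite S_INR.
    pose proof (rsum_telescope (fun i => s (k + t + i)%nat) N) as T. simpl in T.
    replace (rsum (fun i => s (k + S t + i)%nat) N) with (rsum (fun i => s (k + t + S i)%nat) N)
      by (apply rsum_ext; intros; f_equal; lia).
    replace (rsum (fun i => s (k + t + S i)%nat) N - rsum (fun i => s (k + i)%nat) N) with
      ((rsum (fun i => s (k + t + S i)%nat) N - rsum (fun i => s (k + t + i)%nat) N) +
       (rsum (fun i => s (k + t + i)%nat) N - rsum (fun i => s (k + i)%nat) N)) by ring.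
    eapply Rle_trans. apply Rabs_triang. rewrite T.
    assert (Rabs (s (k + t + N)%nat - s (k + t + 0)%nat) <= 2 * S0).
    { eapply Rle_trans. apply Rabs_triang. rewrite Rabs_Ropp. pose proof (Hs (k+t+N)%nat). pose proof (Hs (k+t+0)%nat). lra. }
    lra.
Qed.

Lemma shift_bound2 s S0 k m N M : (forall i, Rabs (s i) <= S0) -> (m <= k + M)%nat -> (k <= m + M)%nat ->
  Rabs (rsum (fun i => s (k + i)%nat) N - rsum (fun i => s (m + i)%nat) N) <= 2 * S0 * INR M.
Proof.
  intros Hs H1 H2. assert (0 <= S0) by (pose proof (Hs 0%nat); pose proof (Rabs_pos (s 0%nat)); lra).
  destruct (le_lt_dec m k).
  - replace k with (m + (k - m))%nat by lia. eapply Rle_trans. apply shift_bound; auto.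
    apply Rmult_le_compat_l. lra. apply le_INR. lia.
  - replace m with (k + (m - k))%nat by lia. rewrite <- Rabs_Ropp. replace (- _) with
      (rsum (fun i => s (k + (m - k) + i)%nat) N - rsum (fun i => s (k + i)%nat) N) by ring.
    eapply Rle_trans. apply shift_bound; auto.
    apply Rmult_le_compat_l. lra. apply le_INR. lia.
Qed.

Lemma osc_bound s S0 : (forall i, Rabs (s i) <= S0) -> AP s ->
  forall eps, eps > 0 -> exists N1, forall N k, (N1 <= N)%nat -> Rabs (Avg s N k - Avg s N 0) <= 2 * eps.
Proof.
  intros Hs Hap eps He. destruct (Hap eps He) as [M HM].
  assert (HS0 : 0 <= S0) by (pose proof (Hs 0%nat); pose proof (Rabs_pos (s 0%nat)); lra).
  destruct (INR_unbounded (2 * S0 * INR M / eps)) as [N1 HN1].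
  exists (S N1). intros N k HN. destruct (HM k) as [m [H1 [H2 H3]]].
  assert (HNpos : INR N > 0) by (apply lt_0_INR; lia).
  assert (HN' : INR N >= INR N1) by (apply Rle_ge, le_INR; lia).
  unfold Avg. replace (rsum (fun i => s (k + i)%nat) N / INR N - rsum (fun i => s (0 + i)%nat) N / INR N)
    with ((rsum (fun i => s (k + i)%nat) N - rsum (fun i => s (m + i)%nat) N) / INR N +
          (rsum (fun i => s (m + i)%nat) N - rsum (fun i => s (0 + i)%nat) N) / INR N) by (field; lra).
  eapply Rle_trans. apply Rabs_triang. unfold Rdiv. rewrite !Rabs_mult, Rabs_inv, (Rabs_pos_eq (INR N)) by lra.
  pose proof (shift_bound2 s S0 k m N M Hs H1 H2) as B1.
  assert (B2 : Rabs (rsum (fun i => s (m + i)%nat) N - rsum (fun i => s (0 + i)%nat) N) <= INR N * eps).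
  { replace (rsum (fun i => s (m + i)%nat) N - rsum (fun i => s (0 + i)%nat) N) with
      (rsum (fun i => s (m + i)%nat - s i) N).
    apply rsum_abs_le. auto.
    clear. induction N; cbn [rsum]. ring. rewrite IHN. simpl. ring. }
  assert (2 * S0 * INR M <= eps * INR N).
  { assert (2 * S0 * INR M / eps < INR N) by lra.
    apply (Rmult_lt_compat_r eps) in H; [|lra]. unfold Rdiv in H. rewrite Rmult_assoc, Rinv_l in H by lra. lra. }
  assert (0 < / INR N) by (apply Rinv_0_lt_compat; lra).
  assert (Rabs (rsum (fun i => s (k + i)%nat) N - rsum (fun i => s (m + i)%nat) N) * / INR N <= eps).
  { apply (Rmult_le_reg_r (INR N)). lra. rewrite Rmult_assoc, Rinv_l by lra. lra. }
  assert (Rabs (rsum (fun i => s (m + i)%nat) N - rsum (fun i => s (0 + i)%nat) N) * / INR N <= eps).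
  { apply (Rmult_le_reg_r (INR N)). lra. rewrite Rmult_assoc, Rinv_l by lra. lra. }
  lra.
Qed.

Lemma rsum_block s N L : rsum s (L * N) = rsum (fun j => rsum (fun i => s (j * N + i)%nat) N) L.
Proof.
  induction L. reflexivity.
  replace (S L * N)%nat with (L * N + N)%nat by lia.
  rewrite rsum_split, IHL. simpl. reflexivity.
Qed.

Lemma avg_block s N L : (N > 0)%nat -> (L > 0)%nat ->
  Avg s (L * N) 0 - Avg s N 0 = rsum (fun j => Avg s N (j * N) - Avg s N 0) L / INR L.
Proof.
  intros HN HL. unfold Avg. simpl.
  rewrite (rsum_ext (fun i => s (0 + i)%nat) s) by (intros; reflexivity).
  rewrite rsum_block, rsum_sub, rsum_const.
  assert (INR N > 0) by (apply lt_0_INR; lia). assert (INR L > 0) by (apply lt_0_INR; lia).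
  rewrite mult_INR. unfold Rdiv.
  rewrite (rsum_ext (fun j => rsum (fun i => s (j * N + i)%nat) N * / INR N)
                    (fun j => / INR N * rsum (fun i => s (j * N + i)%nat) N)) by (intros; ring).
  rewrite rsum_scal. field. lra.
Qed.

Lemma avg_cauchy s S0 : (forall i, Rabs (s i) <= S0) -> AP s ->
  forall eps, eps > 0 -> exists N1, (N1 > 0)%nat /\ forall N L, (N1 <= N)%nat -> (N1 <= L)%nat ->
    Rabs (Avg s N 0 - Avg s L 0) <= 4 * eps /\ forall k, Rabs (Avg s N k - Avg s N 0) <= 2 * eps.
Proof.
  intros Hs Hap eps He. destruct (osc_bound s S0 Hs Hap eps He) as [N1 HN1].
  exists (S N1). split. lia. intros N L HN HL. split; [|intros; apply HN1; lia].
  assert (Hblk : forall N L, (S N1 <= N)%nat -> (L > 0)%nat -> Rabs (Avg s (L * N) 0 - Avg s N 0) <= 2 * eps).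
  { intros N' L' HN' HL'. rewrite avg_block by lia.
    assert (INR L' > 0) by (apply lt_0_INR; lia).
    unfold Rdiv. rewrite Rabs_mult, Rabs_inv, (Rabs_pos_eq (INR L')) by lra.
    apply (Rmult_le_reg_r (INR L')). lra. rewrite Rmult_assoc, Rinv_l by lra.
    rewrite Rmult_1_r. replace (2 * eps * INR L') with (INR L' * (2 * eps)) by ring.
    apply rsum_abs_le. intros. apply HN1. lia. }
  pose proof (Hblk N L HN ltac:(lia)). pose proof (Hblk L N HL ltac:(lia)).
  rewrite Nat.mul_comm in H0.
  replace (Avg s N 0 - Avg s L 0) with (- (Avg s (L * N) 0 - Avg s N 0) + (Avg s (L * N) 0 - Avg s L 0)) by ring.
  eapply Rle_trans. apply Rabs_triang. rewrite Rabs_Ropp. lra.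
Qed.

Lemma ergodic_real s S0 : (forall i, Rabs (s i) <= S0) -> AP s ->
  exists c, forall eps, eps > 0 -> exists N0, forall N k, (N0 <= N)%nat -> Rabs (Avg s N k - c) <= eps.
Proof.
  intros Hs Hap. pose proof (avg_cauchy s S0 Hs Hap) as Hcauchy.
  set (u := fun n => Avg s (S n) 0).
  assert (Hc : Cauchy_crit u).
  { intros eps He. destruct (Hcauchy (eps / 8)) as [N1 [HN1pos HN1]]. lra.
    exists N1. intros n m Hn Hm. unfold R_dist, u. destruct (HN1 (S n) (S m)) as [H _]; try lia. lra. }
  destruct (R_complete u Hc) as [c Hcv].
  exists c. intros eps He. destruct (Hcauchy (eps / 8)) as [N1 [HN1pos HN1]]. lra.
  exists N1. intros N k HN.
  assert (HcN : Rabs (Avg s N 0 - c) <= eps / 2).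
  { apply Rnot_lt_le. intro Hlt.
    destruct (Hcv (Rabs (Avg s N 0 - c) - eps / 2)) as [L HL]. lra.
    specialize (HL (L + N1)%nat ltac:(lia)). unfold R_dist, u in HL.
    destruct (HN1 N (S (L + N1))) as [H _]; try lia.
    assert (Rabs (Avg s N 0 - c) <= Rabs (Avg s N 0 - Avg s (S (L + N1)) 0) + Rabs (Avg s (S (L + N1)) 0 - c)).
    { replace (Avg s N 0 - c) with ((Avg s N 0 - Avg s (S (L + N1)) 0) + (Avg s (S (L + N1)) 0 - c)) by ring.
      apply Rabs_triang. }
    lra. }
  destruct (HN1 N N HN HN) as [_ H2]. specialize (H2 k).
  replace (Avg s N k - c) with ((Avg s N k - Avg s N 0) + (Avg s N 0 - c)) by ring.
  eapply Rle_trans. apply Rabs_triang. lra.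
Qed.

(** * The approximate cohomological equation on the orbit

   For g continuous on G there is a constant c such that, for every eps, the sequence
   g(x_k) - c equals H(x_(k+1)) - H(x_k) up to eps, with H continuous on G.  The
   constant c is the mean of g(x_k); H is the classical transfer function built from
   window averages of length N. *)

Lemma AP_of_cont {G : CAGroup} (x1 : G) (g : G -> CC) (pr : CC -> R) :
  dense_cyclic G x1 -> contR g -> (pr = fst \/ pr = snd) ->
  AP (fun k => pr (g (nmul k x1))).
Proof.
  intros Hd Hg Hpr eps He. destruct (unif_cont g Hg eps He) as [V [HV [H0 HVg]]].
  destruct (orbit_cover x1 V Hd HV H0) as [M HM]. exists M. intros k.
  destruct (HM k) as [m [H1 [H2 H3]]]. exists m. split; auto. split; auto.
  intros i. rewrite nmul_add, gaddC. destruct (HVg (nmul i x1) (nmul m x1) H3).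
  destruct Hpr; subst; auto.
Qed.

Lemma bounded_of_cont {G : CAGroup} (x1 : G) (g : G -> CC) (pr : CC -> R) :
  contR g -> (pr = fst \/ pr = snd) -> exists S, forall i, Rabs (pr (g (nmul i x1))) <= S.
Proof.
  intros Hg Hpr. destruct (cont_bounded g Hg) as [S [_ HS]]. exists S. intros i.
  destruct (HS (nmul i x1)). destruct Hpr; subst; auto.
Qed.

Definition cob_solution {G : CAGroup} (x1 : G) (g : G -> CC) (N : nat) (y : G) : CC :=
  Cmul (RtoC (- / INR N)) (csumf (fun n => csumf (fun i => g (gadd y (nmul i x1))) n) N).

Lemma cob_solution_cont {G : CAGroup} (x1 : G) g N : contR g -> contR (cob_solution x1 g N).
Proof.
  intros Hg. unfold cob_solution. apply contR_mul. apply contR_const.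
  apply (contR_csumf (fun n y => csumf (fun i => g (gadd y (nmul i x1))) n)). intros n.
  apply (contR_csumf (fun i y => g (gadd y (nmul i x1)))). intros i.
  apply contR_trans; auto.
Qed.

Lemma cob_solution_comp {G : CAGroup} (x1 : G) g N k (pr : CC -> R) : (pr = fst \/ pr = snd) ->
  pr (cob_solution x1 g N (nmul k x1)) = - / INR N * rsum (fun n => rsum (fun i => pr (g (nmul (k + i) x1))) n) N.
Proof.
  intros Hpr. unfold cob_solution.
  destruct Hpr; subst; unfold Cmul, RtoC; simpl; rewrite ?fst_csumf, ?snd_csumf.
  - rewrite Rmult_0_l, Rminus_0_r. f_equal. apply rsum_ext; intros n _. rewrite fst_csumf.
    apply rsum_ext; intros i _. rewrite nmul_add. auto.
  - rewrite Rmult_0_l, Rplus_0_r. f_equal. apply rsum_ext; intros n _. rewrite snd_csumf.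
    apply rsum_ext; intros i _. rewrite nmul_add. auto.
Qed.

Lemma cob_solution_diff {G : CAGroup} (x1 : G) g N k (pr : CC -> R) : (pr = fst \/ pr = snd) -> (N > 0)%nat ->
  pr (g (nmul k x1)) - (pr (cob_solution x1 g N (nmul (S k) x1)) - pr (cob_solution x1 g N (nmul k x1))) =
  Avg (fun i => pr (g (nmul i x1))) N k.
Proof.
  intros Hpr HN. rewrite !cob_solution_comp by auto.
  set (s := fun i => pr (g (nmul i x1))).
  change (fun n => rsum (fun i => pr (g (nmul (S k + i) x1))) n) with (fun n => rsum (fun i => s (S k + i)%nat) n).
  change (fun n => rsum (fun i => pr (g (nmul (k + i) x1))) n) with (fun n => rsum (fun i => s (k + i)%nat) n).
  change (pr (g (nmul k x1))) with (s k).
  assert (E : forall n, rsum (fun i => s (S k + i)%nat) n - rsum (fun i => s (k + i)%nat) n = s (k + n)%nat - s k).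
  { intros n. pose proof (rsum_telescope (fun i => s (k + i)%nat) n) as T. simpl in T.
    rewrite Nat.add_0_r in T. rewrite <- T. f_equal. apply rsum_ext. intros. f_equal. lia. }
  assert (E2 : - / INR N * rsum (fun n => rsum (fun i => s (S k + i)%nat) n) N -
               - / INR N * rsum (fun n => rsum (fun i => s (k + i)%nat) n) N =
               - / INR N * (rsum (fun n => s (k + n)%nat) N - INR N * s k)).
  { rewrite <- Rmult_minus_distr_l, <- rsum_sub. f_equal.
    rewrite (rsum_ext _ (fun n => s (k + n)%nat - s k)) by (intros; apply E).
    rewrite rsum_sub, rsum_const. reflexivity. }
  rewrite E2. unfold Avg. assert (INR N > 0) by (apply lt_0_INR; lia). field. lra.
Qed.

Lemma ergodic_cob {G : CAGroup} (x1 : G) (g : G -> CC) : dense_cyclic G x1 -> contR g ->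
  exists c : CC, forall eps, eps > 0 -> exists H, contR H /\ forall k,
    Rabs (fst (g (nmul k x1)) - fst c - (fst (H (nmul (S k) x1)) - fst (H (nmul k x1)))) <= eps /\
    Rabs (snd (g (nmul k x1)) - snd c - (snd (H (nmul (S k) x1)) - snd (H (nmul k x1)))) <= eps.
Proof.
  intros Hd Hg.
  destruct (bounded_of_cont x1 g fst Hg (or_introl eq_refl)) as [S1 HS1].
  destruct (bounded_of_cont x1 g snd Hg (or_intror eq_refl)) as [S2 HS2].
  destruct (ergodic_real _ S1 HS1 (AP_of_cont x1 g fst Hd Hg (or_introl eq_refl))) as [c1 Hc1].
  destruct (ergodic_real _ S2 HS2 (AP_of_cont x1 g snd Hd Hg (or_intror eq_refl))) as [c2 Hc2].
  exists (c1, c2). intros eps He.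
  destruct (Hc1 eps He) as [N1 HN1]. destruct (Hc2 eps He) as [N2 HN2].
  set (N := S (N1 + N2)).
  exists (cob_solution x1 g N). split. apply cob_solution_cont; auto.
  intros k. change (fst (c1, c2)) with c1. change (snd (c1, c2)) with c2. split.
  - replace (fst (g (nmul k x1)) - c1 - (fst (cob_solution x1 g N (nmul (S k) x1)) - fst (cob_solution x1 g N (nmul k x1))))
      with ((fst (g (nmul k x1)) - (fst (cob_solution x1 g N (nmul (S k) x1)) - fst (cob_solution x1 g N (nmul k x1)))) - c1) by ring.
    rewrite (cob_solution_diff x1 g N k fst (or_introl eq_refl)) by (unfold N; lia). apply HN1. unfold N; lia.
  - replace (snd (g (nmul k x1)) - c2 - (snd (cob_solution x1 g N (nmul (S k) x1)) - snd (cob_solution x1 g N (nmul k x1))))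
      with ((snd (g (nmul k x1)) - (snd (cob_solution x1 g N (nmul (S k) x1)) - snd (cob_solution x1 g N (nmul k x1)))) - c2) by ring.
    rewrite (cob_solution_diff x1 g N k snd (or_intror eq_refl)) by (unfold N; lia). apply HN2. unfold N; lia.
Qed.

(** * Asymptotic structure of the elements of A *)

Definition asymp_toeplitz {G : CAGroup} (x1 : G) (b : mat) : Prop :=
  exists (W N : nat) (F : Z -> G -> CC), banded b W /\ (forall z, contR (F z)) /\
    forall i j, (N <= i)%nat -> (N <= j)%nat -> b i j = F (Z.of_nat i - Z.of_nat j)%Z (nmul j x1).

Lemma asymp_toeplitz_U {G : CAGroup} (x1 : G) : asymp_toeplitz x1 Umat.
Proof.
  exists 1%nat, 0%nat, (fun z _ => if Z.eqb z 1 then Defs.C1 else C0). split; [apply banded_U|split].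
  - intros z. apply contR_const.
  - intros i j _ _. rewrite Umat_entry. destruct (Nat.eqb_spec i (S j)), (Z.eqb_spec (Z.of_nat i - Z.of_nat j) 1); auto; exfalso; lia.
Qed.

Lemma asymp_toeplitz_M {G : CAGroup} (x1 : G) f : continuousC f -> asymp_toeplitz x1 (Mf x1 f).
Proof.
  intros Hf. exists 0%nat, 0%nat, (fun z y => if Z.eqb z 0 then f y else C0). split; [apply banded_diag|split].
  - intros z. destruct (Z.eqb z 0). apply contC_R; auto. apply contR_const.
  - intros i j _ _. unfold Mf, diag. destruct (Nat.eqb_spec i j), (Z.eqb_spec (Z.of_nat i - Z.of_nat j) 0); subst; auto; exfalso; lia.
Qed.

Lemma asymp_toeplitz_add {G : CAGroup} (x1 : G) a b :
  asymp_toeplitz x1 a -> asymp_toeplitz x1 b -> asymp_toeplitz x1 (madd a b).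
Proof.
  intros [Wa [Na [Fa [Ha [Hca Hea]]]]] [Wb [Nb [Fb [Hb [Hcb Heb]]]]].
  exists (Wa + Wb)%nat, (Na + Nb)%nat, (fun z y => Cadd (Fa z y) (Fb z y)). split; [|split].
  - apply banded_add; [apply (banded_mono a Wa)|apply (banded_mono b Wb)]; auto; lia.
  - intros z. apply contR_add; auto.
  - intros i j Hi Hj. unfold madd. rewrite Hea, Heb by lia. auto.
Qed.

Lemma asymp_toeplitz_scal {G : CAGroup} (x1 : G) c a : asymp_toeplitz x1 a -> asymp_toeplitz x1 (mscal c a).
Proof.
  intros [Wa [Na [Fa [Ha [Hca Hea]]]]].
  exists Wa, Na, (fun z y => Cmul c (Fa z y)). split; [|split].
  - apply banded_scal; auto.
  - intros z. apply contR_mul; auto. apply contR_const.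
  - intros i j Hi Hj. unfold mscal. rewrite Hea by lia. auto.
Qed.

Lemma asymp_toeplitz_adj {G : CAGroup} (x1 : G) a : asymp_toeplitz x1 a -> asymp_toeplitz x1 (madj a).
Proof.
  intros [Wa [Na [Fa [Ha [Hca Hea]]]]].
  exists Wa, Na, (fun z y => Cconj (Fa (- z)%Z (gadd y (zmul z x1)))). split; [|split].
  - apply banded_adj; auto.
  - intros z. apply contR_conj. apply contR_trans; auto.
  - intros i j Hi Hj. unfold madj. rewrite Hea by lia. f_equal.
    rewrite (nmul_diff x1 i j). f_equal. lia.
Qed.

(* The entries of a product are finite sums of products of shifted entries. *)
Lemma asymp_toeplitz_mul {G : CAGroup} (x1 : G) a b :
  asymp_toeplitz x1 a -> asymp_toeplitz x1 b -> asymp_toeplitz x1 (mmul a b).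
Proof.
  intros [Wa [Na [Fa [Ha [Hca Hea]]]]] [Wb [Nb [Fb [Hb [Hcb Heb]]]]].
  set (T := fun t : nat => (Z.of_nat t - Z.of_nat Wb)%Z).
  exists (Wa + Wb)%nat, (Na + Nb + Wb)%nat,
    (fun z y => csumf (fun t => Cmul (Fa (z - T t)%Z (gadd y (zmul (T t) x1))) (Fb (T t) y)) (Wb + Wb + 1)).
  split; [|split].
  - apply banded_mul; auto.
  - intros z. apply (contR_csumf (fun t y => Cmul (Fa (z - T t)%Z (gadd y (zmul (T t) x1))) (Fb (T t) y))).
    intros t. apply contR_mul; auto. apply contR_trans; auto.
  - intros i j Hi Hj. rewrite (mmul_band_r a b Wb (j - Wb + (Wb + Wb + 1))) by (auto; lia).
    rewrite csumf_split. rewrite csumf_zero.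
    2: { intros l Hl. rewrite Hb by lia. ceq. }
    transitivity (csumf (fun t => Cmul (a i (j - Wb + t)%nat) (b (j - Wb + t)%nat j)) (Wb + Wb + 1)).
    { apply CC_ext; csimpl; ring. }
    apply csumf_ext. intros t Ht. rewrite Hea, Heb by lia. f_equal.
    + f_equal. unfold T. lia. rewrite (nmul_diff x1 (j - Wb + t) j). f_equal. f_equal. unfold T. lia.
    + f_equal. unfold T. lia.
Qed.

Lemma asymp_toeplitz_all {G : CAGroup} (x1 : G) b : star_alg (genA x1) b -> asymp_toeplitz x1 b.
Proof.
  induction 1.
  - destruct H as [->|[f [Hf ->]]]. apply asymp_toeplitz_U. apply asymp_toeplitz_M; auto.
  - apply asymp_toeplitz_add; auto.
  - apply asymp_toeplitz_scal; auto.
  - apply asymp_toeplitz_mul; auto.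
  - apply asymp_toeplitz_adj; auto.
Qed.

Lemma asymp_toeplitz_subdiag {G : CAGroup} (x1 : G) b : asymp_toeplitz x1 b ->
  exists N (F : G -> CC), contR F /\ forall k, (N <= k)%nat -> b (S k) k = F (nmul k x1).
Proof.
  intros [W [N [F [_ [HF HE]]]]]. exists N, (F 1%Z). split; auto.
  intros k Hk. rewrite HE by lia. f_equal. lia.
Qed.

(** * Means modulo bounded coboundaries

   A real sequence b has mean c modulo bounded coboundaries if, for every eps, b - c is
   eps-close to a discrete coboundary h(k+1) - h(k) of a bounded sequence h.  Such a
   mean is unique, and depends 1-Lipschitz on b in the sup norm: summing over n terms,
   n (c - c') is controlled by n sup|b - b'| plus the bounded boundary terms. *)

Definition cob_mean (b : nat -> R) (c : R) : Prop :=
  forall eps, eps > 0 -> exists (h : nat -> R) (B : R), (forall k, Rabs (h k) <= B) /\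
    forall k, Rabs (b k - c - (h (S k) - h k)) <= eps.

Lemma nonpos_of_linear_bound (x K : R) : (forall n, INR n * x <= K) -> x <= 0.
Proof.
  intros H. apply Rnot_lt_le. intros Hx.
  destruct (INR_archimed x K ltac:(lra)) as [n Hn]. specialize (H n). lra.
Qed.

Lemma telescope_bound (a h : nat -> R) eps :
  (forall k, Rabs (a k - (h (S k) - h k)) <= eps) ->
  forall n, Rabs (rsum a n - (h n - h 0%nat)) <= INR n * eps.
Proof.
  intros H n. induction n; cbn [rsum].
  - simpl. replace (0 - (h 0%nat - h 0%nat)) with 0 by ring. rewrite Rabs_R0. lra.
  - rewrite S_INR. specialize (H n).
    replace (rsum a n + a n - (h (S n) - h 0%nat))
      with ((rsum a n - (h n - h 0%nat)) + (a n - (h (S n) - h n))) by ring.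
    eapply Rle_trans. apply Rabs_triang. lra.
Qed.

Lemma cob_mean_close b b' c c' delta : cob_mean b c -> cob_mean b' c' ->
  (forall k, Rabs (b k - b' k) <= delta) -> Rabs (c - c') <= delta.
Proof.
  intros Hb Hb' Hd. apply Rle_plus_epsilon. intros e He.
  destruct (Hb (e / 2) ltac:(lra)) as [h [B [HB Hh]]].
  destruct (Hb' (e / 2) ltac:(lra)) as [h' [B' [HB' Hh']]].
  set (a := fun k => (b k - b' k) - (c - c')).
  set (g := fun k => h k - h' k).
  assert (Hag : forall k, Rabs (a k - (g (S k) - g k)) <= e).
  { intros k. unfold a, g.
    replace (b k - b' k - (c - c') - (h (S k) - h' (S k) - (h k - h' k)))
      with ((b k - c - (h (S k) - h k)) - (b' k - c' - (h' (S k) - h' k))) by ring.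
    unfold Rminus at 1. eapply Rle_trans. apply Rabs_triang. rewrite Rabs_Ropp.
    specialize (Hh k). specialize (Hh' k). lra. }
  apply Rminus_le. apply (nonpos_of_linear_bound _ (2 * (B + B'))). intros n.
  pose proof (telescope_bound a g e Hag n) as T.
  assert (Hsum : rsum a n = rsum (fun k => b k - b' k) n - INR n * (c - c')).
  { unfold a. rewrite rsum_sub, rsum_const. reflexivity. }
  pose proof (rsum_abs_le (fun k => b k - b' k) n delta Hd) as Hs.
  assert (Hg : Rabs (g n - g 0%nat) <= 2 * (B + B')).
  { unfold g. replace (h n - h' n - (h 0%nat - h' 0%nat)) with (h n + - h 0%nat + (- h' n + h' 0%nat)) by ring.
    eapply Rle_trans. apply Rabs_triang. eapply Rle_trans. apply Rplus_le_compat; apply Rabs_triang.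
    rewrite !Rabs_Ropp. pose proof (HB n). pose proof (HB 0%nat). pose proof (HB' n). pose proof (HB' 0%nat). lra. }
  assert (Hn : INR n * Rabs (c - c') <= INR n * delta + 2 * (B + B') + INR n * e).
  { rewrite <- (Rabs_pos_eq (INR n)) at 1 by apply pos_INR. rewrite <- Rabs_mult.
    replace (INR n * (c - c')) with (rsum (fun k => b k - b' k) n - (rsum a n - (g n - g 0%nat)) - (g n - g 0%nat))
      by (rewrite Hsum; ring).
    eapply Rle_trans. unfold Rminus at 1. apply Rabs_triang. rewrite Rabs_Ropp.
    eapply Rle_trans. apply Rplus_le_compat_r. unfold Rminus at 1. apply Rabs_triang. rewrite Rabs_Ropp. lra. }
  lra.
Qed.

Lemma cob_mean_unique b c c' : cob_mean b c -> cob_mean b c' -> c = c'.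
Proof.
  intros H H'. pose proof (cob_mean_close b b c c' 0 H H') as E.
  assert (Rabs (c - c') <= 0) by (apply E; intros; rewrite Rminus_diag, Rabs_R0; lra).
  pose proof (Rabs_pos (c - c')). apply Rminus_diag_uniq. destruct (Req_dec (c - c') 0) as [|Hne]; auto. apply Rabs_pos_lt in Hne. lra.
Qed.

Definition dl (n : nat) : R := / INR (S n).

Lemma dl_pos n : dl n > 0.
Proof. unfold dl. apply Rinv_0_lt_compat, lt_0_INR; lia. Qed.
Lemma dl_mono n m : (n <= m)%nat -> dl m <= dl n.
Proof. intros. unfold dl. apply Rinv_le_contravar. apply lt_0_INR; lia. apply le_INR; lia. Qed.

Lemma dl_small eps : eps > 0 -> exists n, dl n <= eps.
Proof.
  intros He. destruct (INR_unbounded (/ eps)) as [n Hn]. exists n. unfold dl.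
  rewrite S_INR. pose proof (pos_INR n).
  apply (Rmult_le_reg_l (INR n + 1)). lra. rewrite Rinv_r by lra.
  apply (Rmult_le_reg_r (/ eps)). apply Rinv_0_lt_compat; lra.
  rewrite Rmult_assoc, Rinv_r by lra. lra.
Qed.

Lemma dl_eventually_small eps : eps > 0 -> exists J, forall n, (J <= n)%nat -> 2 * dl n <= eps.
Proof.
  intros He. destruct (dl_small (eps / 2)) as [J HJ]. lra. exists J. intros n Hn.
  pose proof (dl_mono J n Hn). lra.
Qed.

Lemma cauchy_limit_rate (u : nat -> R) :
  (forall n m, Rabs (u n - u m) <= dl n + dl m) -> exists l, forall n, Rabs (u n - l) <= dl n.
Proof.
  intros Hu.
  assert (Hc : Cauchy_crit u).
  { intros eps He. destruct (dl_small (eps / 4)) as [N HN]. lra.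
    exists N. intros n m Hn Hm. unfold R_dist. eapply Rle_lt_trans. apply Hu.
    pose proof (dl_mono N n Hn). pose proof (dl_mono N m Hm). lra. }
  destruct (R_complete u Hc) as [l Hl]. exists l. intros n.
  apply Rnot_lt_le. intro Hlt. set (gap := Rabs (u n - l) - dl n).
  destruct (dl_small (gap / 2)) as [m0 Hm0]. unfold gap; lra.
  destruct (Hl (gap / 2)) as [N HN]. unfold gap; lra.
  specialize (HN (m0 + N)%nat ltac:(lia)). unfold R_dist in HN.
  pose proof (Hu n (m0 + N)%nat). pose proof (dl_mono m0 (m0 + N) ltac:(lia)).
  assert (Rabs (u n - l) <= Rabs (u n - u (m0 + N)%nat) + Rabs (u (m0 + N)%nat - l)).
  { replace (u n - l) with ((u n - u (m0 + N)%nat) + (u (m0 + N)%nat - l)) by ring. apply Rabs_triang. }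
  unfold gap in *. lra.
Qed.

Definition ccob_mean (b : nat -> CC) (c : CC) : Prop :=
  cob_mean (fun k => fst (b k)) (fst c) /\ cob_mean (fun k => snd (b k)) (snd c).

Lemma ccob_mean_unique b c c' : ccob_mean b c -> ccob_mean b c' -> c = c'.
Proof.
  intros [H1 H2] [H1' H2']. apply CC_ext; eapply cob_mean_unique; eauto.
Qed.

Lemma ccob_mean_shift b c e : ccob_mean b c -> ccob_mean (fun k => Cadd (b k) e) (Cadd c e).
Proof.
  intros [H1 H2]. split; intros eps He;
    [destruct (H1 eps He) as [h [B [HB Hh]]]|destruct (H2 eps He) as [h [B [HB Hh]]]];
    exists h, B; split; auto; intros k; unfold Cadd; simpl;
    [replace (fst (b k) + fst e - (fst c + fst e)) with (fst (b k) - fst c) by ring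
    |replace (snd (b k) + snd e - (snd c + snd e)) with (snd (b k) - snd c) by ring]; auto.
Qed.

(** For the existence part the coboundaries must come from sequences h that define
   diagonal elements of A: h(k) = H(x_k) + e(k) with H continuous on G and e
   eventually constant ([regular_seq]). *)

Definition regular_seq {G : CAGroup} (x1 : G) (h : nat -> CC) : Prop :=
  exists (H : G -> CC) (e : nat -> CC) (N : nat), contR H /\ (forall k, (N <= k)%nat -> e k = e N) /\
    forall k, h k = Cadd (H (nmul k x1)) (e k).

Definition cob_err (b : nat -> CC) (c : CC) (h : nat -> CC) (k : nat) : CC :=
  Csub (Csub (b k) c) (Csub (h (S k)) (h k)).

Lemma cob_err_fst b c h k : fst (cob_err b c h k) = fst (b k) - fst c - (fst (h (S k)) - fst (h k)).
Proof. unfold cob_err, Csub, Cadd, Copp; simpl; ring. Qed.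
Lemma cob_err_snd b c h k : snd (cob_err b c h k) = snd (b k) - snd c - (snd (h (S k)) - snd (h k)).
Proof. unfold cob_err, Csub, Cadd, Copp; simpl; ring. Qed.

Definition reg_cob_mean {G : CAGroup} (x1 : G) (b : nat -> CC) (c : CC) : Prop :=
  forall eps, eps > 0 -> exists h, regular_seq x1 h /\ forall k,
    Rabs (fst (cob_err b c h k)) <= eps /\ Rabs (snd (cob_err b c h k)) <= eps.

Lemma regular_seq_bounded {G : CAGroup} (x1 : G) h : regular_seq x1 h ->
  exists R, forall k, Rabs (fst (h k)) <= R /\ Rabs (snd (h k)) <= R.
Proof.
  intros [H [e [N [HH [He Hh]]]]].
  destruct (cont_bounded H HH) as [SS [HS0 HS]].
  set (E := rsum (fun k => Rabs (fst (e k)) + Rabs (snd (e k))) (S N)).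
  assert (HE : forall k, (k <= N)%nat -> Rabs (fst (e k)) <= E /\ Rabs (snd (e k)) <= E).
  { intros k Hk. unfold E.
    assert (Rabs (fst (e k)) + Rabs (snd (e k)) <= rsum (fun k => Rabs (fst (e k)) + Rabs (snd (e k))) (S N)).
    { eapply Rle_trans; [|apply (rsum_mono_n _ (S k) (S N)); [intros; pose proof (Rabs_pos (fst (e i))); pose proof (Rabs_pos (snd (e i))); lra|lia]].
      simpl. assert (0 <= rsum (fun k => Rabs (fst (e k)) + Rabs (snd (e k))) k).
      { apply rsum_nonneg. intros; pose proof (Rabs_pos (fst (e i))); pose proof (Rabs_pos (snd (e i))); lra. }
      lra. }
    pose proof (Rabs_pos (fst (e k))). pose proof (Rabs_pos (snd (e k))). lra. }
  exists (SS + E). intros k. rewrite Hh. unfold Cadd; simpl.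
  destruct (HS (nmul k x1)).
  assert (Rabs (fst (e k)) <= E /\ Rabs (snd (e k)) <= E).
  { destruct (le_lt_dec k N). auto. rewrite He by lia. auto. }
  destruct H2. split; eapply Rle_trans; try apply Rabs_triang; lra.
Qed.

Lemma reg_cob_mean_ccob {G : CAGroup} (x1 : G) b c : reg_cob_mean x1 b c -> ccob_mean b c.
Proof.
  intros Hb. split; intros eps He; destruct (Hb eps He) as [h [Hh Herr]];
    destruct (regular_seq_bounded x1 h Hh) as [B HB].
  - exists (fun k => fst (h k)), B. split; [intros k; apply HB|].
    intros k. rewrite <- cob_err_fst. apply Herr.
  - exists (fun k => snd (h k)), B. split; [intros k; apply HB|].
    intros k. rewrite <- cob_err_snd. apply Herr.
Qed.

Lemma reg_cob_mean_close {G : CAGroup} (x1 : G) b b' c c' delta :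
  reg_cob_mean x1 b c -> reg_cob_mean x1 b' c' ->
  (forall k, Rabs (fst (b k) - fst (b' k)) <= delta /\ Rabs (snd (b k) - snd (b' k)) <= delta) ->
  Rabs (fst c - fst c') <= delta /\ Rabs (snd c - snd c') <= delta.
Proof.
  intros Hb Hb' Hd.
  destruct (reg_cob_mean_ccob x1 b c Hb) as [H1 H2].
  destruct (reg_cob_mean_ccob x1 b' c' Hb') as [H1' H2'].
  split; [apply (cob_mean_close _ _ _ _ _ H1 H1')|apply (cob_mean_close _ _ _ _ _ H2 H2')];
    intros k; apply Hd.
Qed.

(* Eventually-continuous sequences along the orbit have a mean: this is the solution
   of the cohomological equation, corrected on the first N terms by a finite sum. *)
Lemma reg_cob_mean_of_toeplitz {G : CAGroup} (x1 : G) b : dense_cyclic G x1 -> asymp_toeplitz x1 b ->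
  exists c, reg_cob_mean x1 (fun k => b (S k) k) c.
Proof.
  intros Hd Hs. destruct (asymp_toeplitz_subdiag x1 b Hs) as [N [F [HF HbF]]].
  destruct (ergodic_cob x1 F Hd HF) as [c Hc]. exists c. intros eps He.
  destruct (Hc eps He) as [H [HH HHe]].
  set (f := fun k => Csub (b (S k) k) (F (nmul k x1))).
  assert (Hf0 : forall k, (k >= N)%nat -> f k = C0).
  { intros k Hk. unfold f. rewrite HbF by lia. ceq. }
  exists (fun k => Cadd (H (nmul k x1)) (csumf f k)). split.
  - exists H, (fun k => csumf f k), N. split; auto. split; auto.
    intros k Hk. apply csumf_extend; auto.
  - intros k.
    assert (E : cob_err (fun k => b (S k) k) c (fun k => Cadd (H (nmul k x1)) (csumf f k)) k =
                cob_err (fun k => F (nmul k x1)) c (fun k => H (nmul k x1)) k).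
    { unfold cob_err. change (csumf f (S k)) with (Cadd (csumf f k) (f k)). unfold f. ceq. }
    rewrite E, cob_err_fst, cob_err_snd. apply HHe.
Qed.

(* Uniform limits of sequences having a mean have a mean: the means form a Cauchy
   sequence by [reg_cob_mean_close]. *)
Lemma reg_cob_mean_limit {G : CAGroup} (x1 : G) (b : nat -> CC) :
  (forall delta, delta > 0 -> exists b' c', reg_cob_mean x1 b' c' /\
     forall k, Rabs (fst (b k) - fst (b' k)) <= delta /\ Rabs (snd (b k) - snd (b' k)) <= delta) ->
  exists c, reg_cob_mean x1 b c.
Proof.
  intros Hb.
  assert (Hn : forall n : nat, exists p : (nat -> CC) * CC, reg_cob_mean x1 (fst p) (snd p) /\
     forall k, Rabs (fst (b k) - fst (fst p k)) <= dl n /\ Rabs (snd (b k) - snd (fst p k)) <= dl n).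
  { intros n. destruct (Hb (dl n) (dl_pos n)) as [b' [c' [H1 H2]]]. exists (b', c'). auto. }
  destruct (choice_fun _ (inhabits ((fun _ => C0), C0)) Hn) as [P HP].
  assert (Hcl : forall n m, Rabs (fst (snd (P n)) - fst (snd (P m))) <= dl n + dl m /\
                            Rabs (snd (snd (P n)) - snd (snd (P m))) <= dl n + dl m).
  { intros n m. destruct (HP n) as [Gn Cn]. destruct (HP m) as [Gm Cm].
    apply (reg_cob_mean_close x1 (fst (P n)) (fst (P m))); auto.
    intros k. destruct (Cn k), (Cm k).
    pose proof (Rabs_diff_via (fst (b k)) (fst (fst (P n) k)) (fst (fst (P m) k))).
    pose proof (Rabs_diff_via (snd (b k)) (snd (fst (P n) k)) (snd (fst (P m) k))). lra. }
  destruct (cauchy_limit_rate (fun n => fst (snd (P n)))) as [cf Hcf]. intros; apply Hcl.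
  destruct (cauchy_limit_rate (fun n => snd (snd (P n)))) as [cs Hcs]. intros; apply Hcl.
  exists (cf, cs). intros eps He.
  destruct (dl_small (eps / 4)) as [n Hn']. lra.
  destruct (HP n) as [Gn Cn]. destruct (Gn (eps / 2)) as [h [Hh Hhe]]. lra.
  exists h. split; auto. intros k.
  specialize (Hcf n). specialize (Hcs n). simpl in Hcf, Hcs.
  destruct (Cn k) as [C1' C2']. destruct (Hhe k) as [E1 E2].
  rewrite cob_err_fst in E1. rewrite cob_err_snd in E2. rewrite cob_err_fst, cob_err_snd. simpl.
  split.
  - pose proof (Rabs_triang3 (fst (b k) - fst (fst (P n) k)) (fst (snd (P n)) - cf)
      (fst (fst (P n) k) - fst (snd (P n)) - (fst (h (S k)) - fst (h k)))) as T.
    replace (fst (b k) - fst (fst (P n) k) + (fst (snd (P n)) - cf)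
             + (fst (fst (P n) k) - fst (snd (P n)) - (fst (h (S k)) - fst (h k))))
      with (fst (b k) - cf - (fst (h (S k)) - fst (h k))) in T by ring. lra.
  - pose proof (Rabs_triang3 (snd (b k) - snd (fst (P n) k)) (snd (snd (P n)) - cs)
      (snd (fst (P n) k) - snd (snd (P n)) - (snd (h (S k)) - snd (h k)))) as T.
    replace (snd (b k) - snd (fst (P n) k) + (snd (snd (P n)) - cs)
             + (snd (fst (P n) k) - snd (snd (P n)) - (snd (h (S k)) - snd (h k))))
      with (snd (b k) - cs - (snd (h (S k)) - snd (h k))) in T by ring. lra.
Qed.

(** * Diagonal elements of A

   Regular sequences h define diagonal operators diag h in the *-algebra generated by
   U and the M_f: the continuous part is M_H, and an eventually constant sequence is a
   combination of the projections Q_n = U^n (U^* )^n onto span{E_k : k >= n}. *)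

Lemma AA_in_A {G : CAGroup} (x1 : G) a : inAA x1 a -> star_alg (genA x1) a.
Proof.
  induction 1.
  - destruct H as [->|[->|[chi [Hc ->]]]].
    + apply sa_gen; left; auto.
    + apply sa_adj. apply sa_gen; left; auto.
    + apply sa_gen; right. exists chi; split; auto. exact (proj1 Hc).
  - apply sa_add; auto.
  - apply sa_scal; auto.
  - apply sa_mul; auto.
  - apply sa_adj; auto.
Qed.

Lemma sA_sub {G : CAGroup} (x1 : G) a b :
  star_alg (genA x1) a -> star_alg (genA x1) b -> star_alg (genA x1) (msub a b).
Proof. intros. rewrite msub_as_add. apply sa_add; auto. apply sa_scal; auto. Qed.

Definition Qn (n : nat) : mat := diag (fun k => if Nat.leb n k then Defs.C1 else C0).

Lemma Iden_in_A {G : CAGroup} (x1 : G) : star_alg (genA x1) Iden.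
Proof.
  apply sa_gen. right. exists (fun _ => Defs.C1). split; [|reflexivity].
  apply contR_C. apply contR_const.
Qed.

Lemma Qn_in_A {G : CAGroup} (x1 : G) n : star_alg (genA x1) (Qn n).
Proof.
  induction n.
  - replace (Qn 0) with Iden. apply Iden_in_A. apply mat_ext; intros. unfold Qn, Iden, diag. simpl. auto.
  - replace (Qn (S n)) with (mmul (mmul Umat (Qn n)) Ut).
    + apply sa_mul. apply sa_mul; auto. apply sa_gen; left; auto. apply sa_adj; apply sa_gen; left; auto.
    + apply mat_ext; intros i j. unfold Qn. destruct j as [|j].
      * rewrite mmul_XUt0. unfold diag. destruct i; simpl; auto.
      * rewrite mmul_XUt. destruct i as [|i].
        -- rewrite mmul_UX0. unfold diag. simpl. auto.
        -- rewrite mmul_UX. unfold diag. simpl. destruct (Nat.eqb i j), (Nat.leb n i); auto.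
Qed.

Lemma diag_evconst_in_A {G : CAGroup} (x1 : G) N : forall e, (forall k, (N <= k)%nat -> e k = e N) ->
  star_alg (genA x1) (diag e).
Proof.
  induction N; intros e He.
  - replace (diag e) with (mscal (e 0%nat) Iden). apply sa_scal. apply Iden_in_A.
    apply mat_ext; intros i j. unfold mscal, Iden, diag. destruct (Nat.eqb_spec i j).
    subst. rewrite (He j) by lia. ceq. ceq.
  - set (dd := Csub (e N) (e (S N))).
    set (e2 := fun k => Csub (e k) (if Nat.leb k N then dd else C0)).
    replace (diag e) with (madd (diag e2) (mscal dd (msub Iden (Qn (S N))))).
    + apply sa_add. apply IHN. intros k Hk. unfold e2. destruct (Nat.leb_spec k N), (Nat.leb_spec N N); try lia.
      * replace k with N by lia. auto.
      * rewrite He by lia. unfold dd. ceq.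
      * apply sa_scal. apply sA_sub. apply Iden_in_A. apply Qn_in_A.
    + apply mat_ext; intros i j. unfold madd, mscal, msub, Iden, Qn, diag, e2.
      destruct (Nat.eqb_spec i j). subst. destruct (Nat.leb_spec j N), (Nat.leb_spec (S N) j); try lia; ceq. ceq.
Qed.

Lemma regular_seq_in_sA {G : CAGroup} (x1 : G) h : regular_seq x1 h -> star_alg (genA x1) (diag h).
Proof.
  intros [H [e [N [HH [He' Hhe]]]]].
  replace (diag h) with (madd (Mf x1 H) (diag e)).
  - apply sa_add. apply sa_gen. right. exists H. split; auto. apply contR_C; auto.
    apply (diag_evconst_in_A x1 N); auto.
  - apply mat_ext; intros i j. unfold madd, Mf, diag. destruct (Nat.eqb i j). rewrite Hhe. auto. ceq.
Qed.

Lemma regular_seq_in_A {G : CAGroup} (x1 : G) h : regular_seq x1 h -> inA x1 (diag h).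
Proof.
  intros Hh. split.
  - destruct (regular_seq_bounded x1 h Hh) as [R HR]. exists (2 * Rabs R). apply mat_bound_diagonal.
    pose proof (Rabs_pos R); lra.
    intros i j Hij. unfold diag. destruct (Nat.eqb_spec i j); [lia|auto].
    intros k. unfold diag. rewrite Nat.eqb_refl. destruct (HR k).
    apply Cnorm2_comp_bound. apply Rabs_pos. eapply Rle_trans; [eauto|apply Rle_abs]. eapply Rle_trans; [eauto|apply Rle_abs].
  - intros eps He. exists (diag h). split. apply regular_seq_in_sA; auto.
    apply mat_bound_zero. lra. intros. unfold msub. ceq.
Qed.

(** * The inner approximation of d - c0 [K, .]

   Fix c0 and, for every n, a regular sequence h_n solving the coboundary equation for
   beta_k = d(U)_(k+1,k) with mean c0 up to dl n.  The inner derivations [diag h_n, .]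
   approach d - c0 [K, .] on U (the defect is the coboundary error), on U^* (by
   [dUt_entry]) and on M_chi (both sides vanish); the set of elements where the
   approximation holds is closed under the algebra operations, hence is all of calA. *)

Lemma commK_entry A i j : commK A i j = Cmul (RtoC (INR i - INR j)) (A i j).
Proof. unfold commK, msub, Kmat. rewrite mmul_DX, mmul_XD. ceq. Qed.

Lemma comm_diag_entry h A i j :
  msub (mmul (diag h) A) (mmul A (diag h)) i j = Cmul (Csub (h i) (h j)) (A i j).
Proof. unfold msub. rewrite mmul_DX, mmul_XD. ceq. Qed.

Lemma commK_add a b : commK (madd a b) = madd (commK a) (commK b).
Proof. apply mat_ext; intros. unfold madd. rewrite !commK_entry. ceq. Qed.
Lemma commK_scal c a : commK (mscal c a) = mscal c (commK a).
Proof. apply mat_ext; intros. unfold mscal. rewrite !commK_entry. ceq. Qed.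

Lemma commK_leibniz a b Wa Wb : banded a Wa -> banded b Wb ->
  commK (mmul a b) = madd (mmul (commK a) b) (mmul a (commK b)).
Proof.
  intros Ha Hb. unfold commK.
  rewrite (mmul_subl _ _ b Wb) by auto. rewrite (mmul_subr a _ _ Wa) by auto.
  assert (HK : banded Kmat 0) by apply banded_diag.
  rewrite (mmul_assoc_band Kmat a b 0 Wa Wb) by auto.
  rewrite (mmul_assoc_band a Kmat b Wa 0 Wb) by auto.
  rewrite (mmul_assoc_band a b Kmat Wa Wb 0) by auto.
  apply mat_ext; intros. unfold msub, madd. ceq.
Qed.

Lemma char_conj {G : CAGroup} (chi : G -> CC) : character chi -> character (fun y => Cconj (chi y)).
Proof.
  intros Hc. pose proof Hc as [Hcont [Habs Hm]]. split; [|split].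
  - apply contR_C. apply contR_conj. apply contC_R; auto.
  - intros x. rewrite <- (Habs x). unfold Cabs, Cnorm2, Cconj; simpl. f_equal. ring.
  - intros x y. rewrite Hm. ceq.
Qed.

Lemma madj_M {G : CAGroup} (x1 : G) chi : madj (Mf x1 chi) = Mf x1 (fun y => Cconj (chi y)).
Proof.
  apply mat_ext; intros i j. unfold madj, Mf, diag.
  destruct (Nat.eqb_spec j i), (Nat.eqb_spec i j); subst; try lia; ceq.
Qed.

Section Approximation.
Context {G : CAGroup} (x1 : G) (d : mat -> mat) (c0 : CC).
Hypothesis Hder : is_derivation x1 d.

Definition dsubK (a : mat) : mat := msub (d a) (mscal c0 (commK a)).

Lemma dsubK_add a b : inAA x1 a -> inAA x1 b -> dsubK (madd a b) = madd (dsubK a) (dsubK b).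
Proof.
  intros Ha Hb. destruct Hder as [_ [Hadd _]]. unfold dsubK. rewrite Hadd by auto. rewrite commK_add.
  apply mat_ext; intros. unfold msub, madd, mscal. ceq.
Qed.

Lemma dsubK_scal c a : inAA x1 a -> dsubK (mscal c a) = mscal c (dsubK a).
Proof.
  intros Ha. destruct Hder as [_ [_ [Hsc _]]]. unfold dsubK. rewrite Hsc by auto. rewrite commK_scal.
  apply mat_ext; intros. unfold msub, mscal. ceq.
Qed.

Lemma dsubK_mul a b : inAA x1 a -> inAA x1 b ->
  dsubK (mmul a b) = madd (mmul (dsubK a) b) (mmul a (dsubK b)).
Proof.
  intros Ha Hb. destruct Hder as [_ [_ [_ Hmul]]].
  destruct (inAA_banded x1 a Ha) as [Wa HWa]. destruct (inAA_banded x1 b Hb) as [Wb HWb].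
  unfold dsubK. rewrite Hmul by auto. rewrite (commK_leibniz a b Wa Wb) by auto.
  rewrite (mmul_subl _ _ b Wb) by auto. rewrite (mmul_subr a _ _ Wa) by auto.
  rewrite (mmul_scall _ _ b Wb) by auto. rewrite (mmul_scalr _ a _ Wa) by auto.
  apply mat_ext; intros. unfold msub, madd, mscal. ceq.
Qed.

Definition inner_defect (X a : mat) : mat := msub (msub (mmul X a) (mmul a X)) (dsubK a).

Lemma inner_defect_entry h a i j :
  inner_defect (diag h) a i j = Csub (Cmul (Csub (h i) (h j)) (a i j)) (dsubK a i j).
Proof. unfold inner_defect. unfold msub at 1. rewrite comm_diag_entry. reflexivity. Qed.

Lemma inner_defect_add h a b : inAA x1 a -> inAA x1 b ->
  inner_defect (diag h) (madd a b) = madd (inner_defect (diag h) a) (inner_defect (diag h) b).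
Proof.
  intros Ha Hb. apply mat_ext; intros i j. unfold madd at 2. rewrite !inner_defect_entry.
  rewrite dsubK_add by auto. unfold madd. ceq.
Qed.

Lemma inner_defect_scal h c a : inAA x1 a ->
  inner_defect (diag h) (mscal c a) = mscal c (inner_defect (diag h) a).
Proof.
  intros Ha. apply mat_ext; intros i j. unfold mscal at 2. rewrite !inner_defect_entry.
  rewrite dsubK_scal by auto. unfold mscal. ceq.
Qed.

Lemma inner_defect_mul h a b : inAA x1 a -> inAA x1 b ->
  inner_defect (diag h) (mmul a b) =
  madd (mmul (inner_defect (diag h) a) b) (mmul a (inner_defect (diag h) b)).
Proof.
  intros Ha Hb.
  destruct (inAA_banded x1 a Ha) as [Wa HWa]. destruct (inAA_banded x1 b Hb) as [Wb HWb].
  assert (HX : banded (diag h) 0) by apply banded_diag.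
  unfold inner_defect. rewrite dsubK_mul by auto.
  rewrite (mmul_subl _ _ b Wb) by auto. rewrite (mmul_subr a _ _ Wa) by auto.
  rewrite (mmul_subl _ _ b Wb) by auto. rewrite (mmul_subr a _ _ Wa) by auto.
  rewrite (mmul_assoc_band (diag h) a b 0 Wa Wb) by auto.
  rewrite (mmul_assoc_band a (diag h) b Wa 0 Wb) by auto.
  rewrite (mmul_assoc_band a b (diag h) Wa Wb 0) by auto.
  apply mat_ext; intros. unfold msub, madd. ceq.
Qed.

Definition approx_by (h : nat -> nat -> CC) (a : mat) : Prop :=
  inAA x1 a /\ Defs.bounded a /\
  forall eps, eps > 0 -> exists J, forall n, (J <= n)%nat -> mat_bound (inner_defect (diag (h n)) a) eps.

Lemma approx_by_add h a b : approx_by h a -> approx_by h b -> approx_by h (madd a b).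
Proof.
  intros [Ha [[ra Hra] Hea]] [Hb [[rb Hrb] Heb]].
  split; [apply sa_add; auto|split].
  - exists (2 * (ra + rb)). apply mat_bound_add; auto.
  - intros eps He. destruct (Hea (eps / 4)) as [J1 HJ1]. lra. destruct (Heb (eps / 4)) as [J2 HJ2]. lra.
    exists (J1 + J2)%nat. intros n Hn. rewrite inner_defect_add by auto.
    eapply mat_bound_mono; [|apply mat_bound_add; [apply HJ1|apply HJ2]; lia]. lra.
Qed.

Lemma approx_by_scal h c a : approx_by h a -> approx_by h (mscal c a).
Proof.
  intros [Ha [[ra Hra] Hea]].
  set (K := Rabs (fst c) + Rabs (snd c)).
  assert (HK : K >= 0) by (unfold K; pose proof (Rabs_pos (fst c)); pose proof (Rabs_pos (snd c)); lra).
  split; [apply sa_scal; auto|split].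
  - exists (K * ra). apply mat_bound_scal; auto.
  - intros eps He. destruct (Hea (eps / (K + 1))) as [J HJ]. apply Rdiv_lt_0_compat; lra.
    exists J. intros n Hn. rewrite inner_defect_scal by auto.
    eapply mat_bound_mono; [|apply mat_bound_scal; apply HJ; auto].
    fold K. apply (Rmult_le_reg_r (K + 1)). lra.
    replace (K * (eps / (K + 1)) * (K + 1)) with (K * eps) by (field; lra). nra.
Qed.

Lemma approx_by_mul h a b : approx_by h a -> approx_by h b -> approx_by h (mmul a b).
Proof.
  intros [Ha [[ra Hra] Hea]] [Hb [[rb Hrb] Heb]].
  destruct (inAA_banded x1 a Ha) as [Wa HWa]. destruct (inAA_banded x1 b Hb) as [Wb HWb].
  assert (Hra0 : 0 <= ra) by apply Hra. assert (Hrb0 : 0 <= rb) by apply Hrb.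
  split; [apply sa_mul; auto|split].
  - exists (ra * rb). apply (mat_bound_mul_r a b ra rb Wb); auto.
  - intros eps He. set (e' := eps / (4 * (ra + rb) + 1)).
    assert (He' : e' > 0) by (unfold e'; apply Rdiv_lt_0_compat; lra).
    destruct (Hea e' He') as [J1 HJ1]. destruct (Heb e' He') as [J2 HJ2].
    exists (J1 + J2)%nat. intros n Hn. rewrite inner_defect_mul by auto.
    eapply mat_bound_mono;
      [|apply mat_bound_add; [apply (mat_bound_mul_r _ b e' rb Wb); auto; apply HJ1; lia
                             |apply (mat_bound_mul_l a _ e' ra Wa); auto; apply HJ2; lia]].
    assert (e' * (4 * (ra + rb) + 1) = eps) by (unfold e'; field; lra). nra.
Qed.

Hypothesis Hinv : invariant x1 d.
Variable h : nat -> nat -> CC.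
Hypothesis Hh : forall n, regular_seq x1 (h n) /\ forall k,
  Rabs (fst (cob_err (fun k => d Umat (S k) k) c0 (h n) k)) <= dl n /\
  Rabs (snd (cob_err (fun k => d Umat (S k) k) c0 (h n) k)) <= dl n.

(* On U the defect is minus the coboundary error, on the subdiagonal. *)
Lemma approx_by_U : approx_by h Umat.
Proof.
  split; [apply inAA_U|split].
  - exists 1. apply mat_bound_subdiag. lra.
    + intros i j Hij. rewrite Umat_entry. destruct (Nat.eqb_spec i (S j)); [lia|auto].
    + intros k. rewrite Umat_entry, Nat.eqb_refl. unfold Cnorm2, Defs.C1; simpl; lra.
  - intros eps He. destruct (dl_eventually_small eps He) as [J HJ]. exists J. intros n Hn.
    eapply mat_bound_mono; [apply (HJ n Hn)|]. apply mat_bound_subdiag.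
    + pose proof (dl_pos n); lra.
    + intros i j Hij. rewrite inner_defect_entry. unfold dsubK, msub, mscal. rewrite commK_entry.
      rewrite Umat_entry. destruct (Nat.eqb_spec i (S j)); [lia|]. rewrite (dU_shape x1 d Hder Hinv) by auto. ceq.
    + intros k. destruct (Hh n) as [_ Hk]. destruct (Hk k) as [E1 E2].
      assert (Heq : inner_defect (diag (h n)) Umat (S k) k =
                    Copp (cob_err (fun k => d Umat (S k) k) c0 (h n) k)).
      { rewrite inner_defect_entry. unfold dsubK, msub, mscal. rewrite commK_entry, Umat_entry, Nat.eqb_refl.
        unfold cob_err. rewrite S_INR. ceq. }
      rewrite Heq. apply Cnorm2_comp_bound. pose proof (dl_pos n); lra.
      unfold Copp; simpl; rewrite Rabs_Ropp; auto. unfold Copp; simpl; rewrite Rabs_Ropp; auto.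
Qed.

(* On U^* the defect is the coboundary error, on the superdiagonal. *)
Lemma approx_by_Ut : approx_by h Ut.
Proof.
  split; [apply inAA_Ut|split].
  - exists 1. apply mat_bound_superdiag. lra.
    + intros i j Hij. rewrite Ut_entry. destruct (Nat.eqb_spec j (S i)); [lia|auto].
    + intros k. rewrite Ut_entry, Nat.eqb_refl. unfold Cnorm2, Defs.C1; simpl; lra.
  - intros eps He. destruct (dl_eventually_small eps He) as [J HJ]. exists J. intros n Hn.
    eapply mat_bound_mono; [apply (HJ n Hn)|]. apply mat_bound_superdiag.
    + pose proof (dl_pos n); lra.
    + intros i j Hij. rewrite inner_defect_entry. unfold dsubK, msub, mscal. rewrite commK_entry.
      rewrite Ut_entry. destruct (Nat.eqb_spec j (S i)); [lia|]. rewrite (dUt_shape x1 d Hder Hinv) by auto. ceq.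
    + intros k. destruct (Hh n) as [_ Hk]. destruct (Hk k) as [E1 E2].
      assert (Heq : inner_defect (diag (h n)) Ut k (S k) = cob_err (fun k => d Umat (S k) k) c0 (h n) k).
      { rewrite inner_defect_entry. unfold dsubK, msub, mscal. rewrite commK_entry, Ut_entry, Nat.eqb_refl.
        rewrite (dUt_entry x1 d Hder Hinv). unfold cob_err. rewrite S_INR. ceq. }
      rewrite Heq. apply Cnorm2_comp_bound. pose proof (dl_pos n); lra. auto. auto.
Qed.

(* On M_chi both [diag h_n, M_chi] and (d - c0 [K, .])(M_chi) vanish. *)
Lemma approx_by_M chi : character chi -> approx_by h (Mf x1 chi).
Proof.
  intros Hc. split; [apply inAA_M; auto|split].
  - exists 1. apply mat_bound_diagonal. lra.
    + intros i j Hij. unfold Mf, diag. destruct (Nat.eqb_spec i j); [lia|auto].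
    + intros k. unfold Mf, diag. rewrite Nat.eqb_refl. rewrite char_norm by auto. lra.
  - intros eps He. exists 0%nat. intros n _. apply mat_bound_zero. lra.
    intros i j. rewrite inner_defect_entry. unfold dsubK, msub, mscal. rewrite commK_entry.
    rewrite (dM_zero x1 d Hder Hinv chi Hc). unfold Mf, diag. destruct (Nat.eqb_spec i j). subst. ceq. ceq.
Qed.

(* Induction over calA; adjoints are handled by carrying the statement for a^* along. *)
Lemma approx_by_all a : inAA x1 a -> approx_by h a /\ approx_by h (madj a).
Proof.
  induction 1.
  - destruct H as [->|[->|[chi [Hc ->]]]].
    + split. apply approx_by_U. apply approx_by_Ut.
    + split. apply approx_by_Ut. unfold Ut. rewrite madj_adj. apply approx_by_U.
    + split. apply approx_by_M; auto. rewrite madj_M. apply approx_by_M. apply char_conj; auto.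
  - destruct IHstar_alg1, IHstar_alg2. split. apply approx_by_add; auto.
    rewrite madj_add. apply approx_by_add; auto.
  - destruct IHstar_alg. split. apply approx_by_scal; auto. rewrite madj_scal. apply approx_by_scal; auto.
  - destruct IHstar_alg1, IHstar_alg2. split. apply approx_by_mul; auto.
    destruct (inAA_banded x1 a H) as [Wa HWa]. destruct (inAA_banded x1 b H0) as [Wb HWb].
    rewrite (madj_mul a b Wa Wb) by auto. apply approx_by_mul; auto.
  - destruct IHstar_alg. split; auto. rewrite madj_adj. auto.
Qed.

(* d - c0 [K, .] maps calA into A: it is a norm limit of [diag h_n, a] in the
   *-algebra, and bounded since it differs from [diag h_J, a] by a bounded defect. *)
Lemma dsubK_in_A a : inAA x1 a -> inA x1 (dsubK a).
Proof.
  intros Ha. destruct (approx_by_all a Ha) as [[_ [[ra Hra] Hea]] _].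
  destruct (inAA_banded x1 a Ha) as [Wa HWa]. split.
  - destruct (Hea 1) as [J HJ]. lra. specialize (HJ J (le_n J)).
    destruct (regular_seq_in_A x1 (h J) (proj1 (Hh J))) as [[rX HrX] _].
    exists (2 * (2 * (rX * ra + ra * rX) + 1)).
    replace (dsubK a) with (msub (msub (mmul (diag (h J)) a) (mmul a (diag (h J))))
                                 (inner_defect (diag (h J)) a))
      by (apply mat_ext; intros; unfold inner_defect, msub; ceq).
    apply mat_bound_sub; auto. apply mat_bound_sub.
    apply (mat_bound_mul_r _ a rX ra Wa); auto. apply (mat_bound_mul_l a _ rX ra Wa); auto.
  - intros eps He. destruct (Hea eps He) as [J HJ]. specialize (HJ J (le_n J)).
    exists (msub (mmul (diag (h J)) a) (mmul a (diag (h J)))). split.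
    + apply sA_sub; apply sa_mul; auto using AA_in_A; apply regular_seq_in_sA, Hh.
    + apply mat_bound_swap. exact HJ.
Qed.

Lemma dsubK_derivation : is_derivation x1 dsubK.
Proof.
  split; [exact dsubK_in_A|split; [|split]].
  - exact dsubK_add.
  - exact dsubK_scal.
  - exact dsubK_mul.
Qed.

Lemma dsubK_approx_inner : approx_inner x1 dsubK.
Proof.
  exists (fun n => diag (h n)). split.
  - intros n. apply regular_seq_in_A, Hh.
  - intros a Ha. destruct (approx_by_all a Ha) as [[_ [_ Hea]] _]. exact Hea.
Qed.

End Approximation.

(* The subdiagonal of d(U) has a mean c0 modulo regular coboundaries: d(U) is a norm
   limit of elements b of the generated *-algebra, whose subdiagonals have means by
   [reg_cob_mean_of_toeplitz], and norm closeness bounds the entries. *)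
Lemma dU_subdiag_mean {G : CAGroup} (x1 : G) d : dense_cyclic G x1 -> is_derivation x1 d ->
  exists c0, reg_cob_mean x1 (fun k => d Umat (S k) k) c0.
Proof.
  intros Hdense Hd. apply reg_cob_mean_limit. intros delta Hdelta.
  destruct Hd as [Hin _]. destruct (Hin Umat (inAA_U x1)) as [_ Happ].
  destruct (Happ delta Hdelta) as [b [Hb Hbd]].
  destruct (reg_cob_mean_of_toeplitz x1 b Hdense (asymp_toeplitz_all x1 b Hb)) as [c' Hc'].
  exists (fun k => b (S k) k), c'. split; auto. intros k.
  pose proof (entry_bound _ _ (S k) k Hbd) as E.
  split; [apply fst_bound in E|apply snd_bound in E]; try lra; exact E.
Qed.

(* Existence: with c0 the mean of the subdiagonal of d(U), d - c0 [K, .] is an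
   approximately inner derivation. *)
Theorem decomposition_exists {G : CAGroup} (x1 : G) d :
  dense_cyclic G x1 -> is_derivation x1 d -> invariant x1 d ->
  exists (c0 : CC) (dt : mat -> mat),
     is_derivation x1 dt /\ approx_inner x1 dt /\
     forall a, inAA x1 a -> d a = madd (mscal c0 (commK a)) (dt a).
Proof.
  intros Hdense Hd Hi.
  destruct (dU_subdiag_mean x1 d Hdense Hd) as [c0 Hc0].
  destruct (choice_fun _ (inhabits (fun _ : nat => C0)) (fun n => Hc0 (dl n) (dl_pos n))) as [h Hh].
  exists c0, (dsubK d c0). split; [|split].
  - exact (dsubK_derivation x1 d c0 Hd Hi h Hh).
  - exact (dsubK_approx_inner x1 d c0 Hd Hi h Hh).
  - intros a Ha. apply mat_ext; intros. unfold dsubK, madd, msub, mscal. ceq.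
Qed.

(* For an approximately inner dt, the subdiagonal of dt(U) has mean 0: it is close to
   that of [X, U], which is the coboundary of the bounded diagonal of X. *)
Lemma approx_inner_subdiag_mean {G : CAGroup} (x1 : G) dt :
  approx_inner x1 dt -> ccob_mean (fun k => dt Umat (S k) k) C0.
Proof.
  intros [x [Hx Hlim]].
  assert (Hgen : forall eps, eps > 0 -> exists (X : mat) r, 0 <= r /\ (forall k, Cnorm2 (X k k) <= r * r) /\
    forall k, Cnorm2 (Csub (Csub (X (S k) (S k)) (X k k)) (dt Umat (S k) k)) <= eps * eps).
  { intros eps He. destruct (Hlim Umat (inAA_U x1) eps He) as [J HJ].
    specialize (HJ J (le_n J)). destruct (Hx J) as [[r Hr] _].
    exists (x J), r. split; [exact (proj1 Hr)|split; [intros; apply entry_bound; exact Hr|]].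
    intros k. pose proof (entry_bound _ _ (S k) k HJ) as Hb.
    unfold msub at 1 2 in Hb. rewrite mmul_XU, mmul_UX in Hb. exact Hb. }
  split; intros eps He; destruct (Hgen eps He) as [X [r [Hr [HX Hd]]]].
  - exists (fun k => fst (X k k)), r. split; [intros k; apply fst_bound; auto|].
    intros k. specialize (Hd k). apply fst_bound in Hd; [|lra].
    unfold Csub, Cadd, Copp, C0 in *; simpl in *. rewrite Rabs_minus_sym.
    replace (fst (X (S k) (S k)) - fst (X k k) - (fst (dt Umat (S k) k) - 0))
      with (fst (X (S k) (S k)) + - fst (X k k) + - fst (dt Umat (S k) k)) by ring. exact Hd.
  - exists (fun k => snd (X k k)), r. split; [intros k; apply snd_bound; auto|].
    intros k. specialize (Hd k). apply snd_bound in Hd; [|lra].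
    unfold Csub, Cadd, Copp, C0 in *; simpl in *. rewrite Rabs_minus_sym.
    replace (snd (X (S k) (S k)) - snd (X k k) - (snd (dt Umat (S k) k) - 0))
      with (snd (X (S k) (S k)) + - snd (X k k) + - snd (dt Umat (S k) k)) by ring. exact Hd.
Qed.

Lemma commK_U_subdiag k : commK Umat (S k) k = Defs.C1.
Proof. rewrite commK_entry, Umat_entry, Nat.eqb_refl, S_INR. ceq. Qed.

(* Uniqueness: the two decompositions give subdiagonals of dt(U) and dt1(U) differing
   by the constant c0 - c1, and both have mean 0. *)
Theorem decomposition_unique {G : CAGroup} (x1 : G) (d : mat -> mat) (c0 c1 : CC) (dt dt1 : mat -> mat) :
  approx_inner x1 dt -> (forall a, inAA x1 a -> d a = madd (mscal c0 (commK a)) (dt a)) ->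
  approx_inner x1 dt1 -> (forall a, inAA x1 a -> d a = madd (mscal c1 (commK a)) (dt1 a)) ->
  c0 = c1 /\ forall a, inAA x1 a -> dt a = dt1 a.
Proof.
  intros Hai H0 Hai1 H1.
  assert (Hsub : forall k, dt1 Umat (S k) k = Cadd (dt Umat (S k) k) (Csub c0 c1)).
  { intros k. pose proof (f_equal (fun M => M (S k) k) (eq_trans (eq_sym (H0 _ (inAA_U x1))) (H1 _ (inAA_U x1)))) as E.
    simpl in E. unfold madd, mscal in E. rewrite commK_U_subdiag in E.
    apply CC_ext; [apply (f_equal fst) in E|apply (f_equal snd) in E]; csimpl; lra. }
  pose proof (ccob_mean_shift _ _ (Csub c0 c1) (approx_inner_subdiag_mean x1 dt Hai)) as Hm.
  cbv beta in Hm.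
  replace (fun k => Cadd (dt Umat (S k) k) (Csub c0 c1)) with (fun k => dt1 Umat (S k) k)
    in Hm by (apply functional_extensionality; exact Hsub).
  pose proof (ccob_mean_unique _ _ _ Hm (approx_inner_subdiag_mean x1 dt1 Hai1)) as E.
  assert (Hc : c0 = c1).
  { apply CC_ext; [apply (f_equal fst) in E|apply (f_equal snd) in E]; csimpl; lra. }
  subst c1. split; [reflexivity|].
  intros a Ha. pose proof (eq_trans (eq_sym (H0 _ Ha)) (H1 _ Ha)) as E'.
  apply mat_ext; intros k j. pose proof (f_equal (fun M => M k j) E') as E''. simpl in E''.
  unfold madd in E''. apply CC_ext; [apply (f_equal fst) in E''|apply (f_equal snd) in E'']; csimpl; lra.
Qed.

(* [K, .] is not approximately inner: the constant subdiagonal 1 of [K, U] would have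
   mean 0, while it obviously has mean 1. *)
Theorem commK_not_approx_inner {G : CAGroup} (x1 : G) : ~ approx_inner x1 commK.
Proof.
  intros Hai. pose proof (approx_inner_subdiag_mean x1 commK Hai) as H0.
  assert (H1 : ccob_mean (fun k => commK Umat (S k) k) Defs.C1).
  { split; intros eps He; exists (fun _ => 0), 0; split; intros k; rewrite ?Rabs_R0; try lra;
      rewrite commK_U_subdiag; simpl; replace (_ - _ - _) with 0 by ring; rewrite Rabs_R0; lra. }
  pose proof (ccob_mean_unique _ _ _ H1 H0) as E. apply (f_equal fst) in E. simpl in E. lra.
Qed.

Theorem proposition3p3 (G : CAGroup) (x1 : G)
  (Hinf : infinite_group G) (Hdense : dense_cyclic G x1)
  (d : mat -> mat) (Hder : is_derivation x1 d) (Hinv : invariant x1 d) :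
  (exists (c0 : CC) (dt : mat -> mat),
     is_derivation x1 dt /\ approx_inner x1 dt /\
     forall a, inAA x1 a -> d a = madd (mscal c0 (commK a)) (dt a)) /\
  (forall (c0 c1 : CC) (dt dt1 : mat -> mat),
     is_derivation x1 dt -> approx_inner x1 dt ->
     (forall a, inAA x1 a -> d a = madd (mscal c0 (commK a)) (dt a)) ->
     is_derivation x1 dt1 -> approx_inner x1 dt1 ->
     (forall a, inAA x1 a -> d a = madd (mscal c1 (commK a)) (dt1 a)) ->
     c0 = c1 /\ forall a, inAA x1 a -> dt a = dt1 a) /\
  ~ approx_inner x1 commK.
Proof.
  split; [|split].
  - exact (decomposition_exists x1 d Hdense Hder Hinv).
  - intros c0 c1 dt dt1 _ Hai H0 _ Hai1 H1. exact (decomposition_unique x1 d c0 c1 dt dt1 Hai H0 Hai1 H1).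
  - exact (commK_not_approx_inner x1).
Qed.
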